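(* Assume (C1) and (C2). Then $$\inf_{u\in\mathcal{N}}I(u)=:c_*=\inf_{u\in\mathcal{D},\,u\neq0}\ \max_{t\ge0}I(tu)$$ and $$\inf_{u\in\mathcal{M}}I(u)=:m_*=\inf_{u\in\mathcal{D},\,u^+\neq0,\,u^-\neq0}\ \max_{s,t\ge0}I(su^++tu^-).$$
   Context: Fix real numbers $p,q,r$ with $1<p<q$, $\frac p2$ a positive integer, and $r\ge1$, and functions $a,b,c:\mathbb{Z}\to(0,+\infty)$. Conditions: - (C1) There is $b_0>0$ with $b(n)\ge b_0$ for all $n$ and $b(n)\to+\infty$ as $|n|\to\infty$. - (C2) There is $c_0>0$ with $c(n)\le c_0$ for all $n$ and $\sum_n c(n)<+\infty$. Notation for a real sequence $u=(u(n))_{n\in\mathbb{Z}}$: $\Delta u(n)=u(n+1)-u(n)$, $u^+(n)=\max\{u(n),0\}$, $u^-(n)=\min\{u(n),0\}$. Spaces: - $E$ is the set of real sequences $u$ with $\|u\|:=\big(\sum_n[a(n)|\Delta u(n)|^p+b(n)|u(n)|^p]\big)^{1/p}<\infty$. - $\mathcal{D}=\{u\in E:\sum_n c(n)|u(n)|^q\ln|u(n)|^r<+\infty\}$, where terms with $u(n)=0$ are read as $0$. For $u,v\in\mathcal{D}$: - $I(u)=\frac1p\|u\|^p+\frac{r}{q^2}\sum_n c(n)|u(n)|^q-\frac1q\sum_n c(n)|u(n)|^q\ln|u(n)|^r$. - $\langle I'(u),v\rangle=\sum_n[a(n)|\Delta u(n)|^{p-2}\Delta u(n)\Delta v(n)+b(n)|u(n)|^{p-2}u(n)v(n)]-\sum_n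 c(n)|u(n)|^{q-2}u(n)v(n)\ln|u(n)|^r$. Sets: - $\mathcal{N}=\{u\in\mathcal{D}:u\ne0,\ \langle I'(u),u\rangle=0\}$. - $\mathcal{M}=\{u\in\mathcal{D}:u^+\ne0,\ u^-\neq0,\ \langle I'(u),u^+\rangle=0,\ \langle I'(u),u^-\rangle=0\}$. *)

From Stdlib Require Import Reals ZArith.
From Coquelicot Require Import Coquelicot.
Open Scope R_scope.

Definition seqZ := Z -> R.

Definition summableZ (f : seqZ) : Prop :=
  ex_series (fun k : nat => Rabs (f (Z.of_nat k))) /\
  ex_series (fun k : nat => Rabs (f (- Z.of_nat (S k))%Z)).

Definition sumZ (f : seqZ) : R :=
  Series (fun k : nat => f (Z.of_nat k)) + Series (fun k : nat => f (- Z.of_nat (S k))%Z).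

Definition rpow (x a : R) : R := if Rlt_dec 0 x then Rpower x a else 0.

Definition Delta (u : seqZ) : seqZ := fun n => u (n + 1)%Z - u n.
Definition upos (u : seqZ) : seqZ := fun n => Rmax (u n) 0.
Definition uneg (u : seqZ) : seqZ := fun n => Rmin (u n) 0.
Definition zeroZ : seqZ := fun _ => 0.
Definition scalZ (t : R) (u : seqZ) : seqZ := fun n => t * u n.
Definition addZ (u v : seqZ) : seqZ := fun n => u n + v n.

Section Functional.
Variables (p q r : R) (a b c : Z -> R).

Definition Eterm (u : seqZ) : seqZ :=
  fun n => a n * rpow (Rabs (Delta u n)) p + b n * rpow (Rabs (u n)) p.

Definition inE (u : seqZ) : Prop := summableZ (Eterm u).

Definition normE (u : seqZ) : R := rpow (sumZ (Eterm u)) (1 / p).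

Definition Lterm (u : seqZ) : seqZ :=
  fun n => if Req_EM_T (u n) 0 then 0
           else c n * rpow (Rabs (u n)) q * ln (rpow (Rabs (u n)) r).

Definition inD (u : seqZ) : Prop := inE u /\ summableZ (Lterm u).

Definition Ifun (u : seqZ) : R :=
  1 / p * rpow (normE u) p
  + r / (q ^ 2) * sumZ (fun n => c n * rpow (Rabs (u n)) q)
  - 1 / q * sumZ (Lterm u).

Definition dI (u v : seqZ) : R :=
  sumZ (fun n => a n * rpow (Rabs (Delta u n)) (p - 2) * Delta u n * Delta v n
               + b n * rpow (Rabs (u n)) (p - 2) * u n * v n)
  - sumZ (fun n => if Req_EM_T (u n) 0 then 0
                   else c n * rpow (Rabs (u n)) (q - 2) * u n * v n
                        * ln (rpow (Rabs (u n)) r)).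

Definition inN (u : seqZ) : Prop := inD u /\ u <> zeroZ /\ dI u u = 0.

Definition inM (u : seqZ) : Prop :=
  inD u /\ upos u <> zeroZ /\ uneg u <> zeroZ /\
  dI u (upos u) = 0 /\ dI u (uneg u) = 0.

Definition maxRay (u : seqZ) : Rbar :=
  Lub_Rbar (fun y => exists t, 0 <= t /\ y = Ifun (scalZ t u)).

Definition maxQuad (u : seqZ) : Rbar :=
  Lub_Rbar (fun y => exists s t, 0 <= s /\ 0 <= t /\
                       y = Ifun (addZ (scalZ s (upos u)) (scalZ t (uneg u)))).
End Functional.

From Pilot Require Import Defs.
From Stdlib Require Import Reals ZArith Lra Lia Psatz.
From Stdlib Require Import FunctionalExtensionality Classical ClassicalEpsilon.
From Coquelicot Require Import Coquelicot.
Open Scope R_scope.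

(* Since p is an even integer, |x|^p = x^p, and for u in D the energy part of
   I(s u^+ + t u^-) is a sum of p-th powers of linear forms s X + t Y whose coefficients
   X, Y (values or increments of u^+ and u^-) have a common sign.  Convexity of z^p in the
   form (s X + t Y)^p <= (X + Y)^(p-1) (s^p X + t^p Y), the bound (1 - s^q)/q <= (1 - s^p)/p
   and 1 - s^q + q s^q ln s >= 0 give, for s, t >= 0,
     I(s u^+ + t u^-) <= I(u) - (1 - s^q)/q <I'(u),u^+> - (1 - t^q)/q <I'(u),u^->,
   so on N (s = t) and on M the ray, resp. the quadrant, is maximised at u itself.
   Conversely, every u <> 0 has a multiple on N by the intermediate value theorem applied to
   t |-> <I'(tu),tu>, and when u^+, u^- <> 0 the function (s,t) |-> I(s u^+ + t u^-) is
   nondecreasing near the axes and negative far out, so it has a maximum with s, t > 0.  There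
   the energy is not differentiated: its convexity bounds the one-sided difference quotients,
   which reduces both critical point equations to derivatives of the explicit logarithmic
   part, and places s u^+ + t u^- on M.  Hence both pairs of infima range over the same
   values. *)

(* [Reals] also exports a [Delta] (the discriminant of a quadratic). *)
Local Notation Delta := Defs.Delta.

Lemma ex_series_Rabs_le (a b : nat -> R) :
  (forall n, Rabs (a n) <= b n) -> ex_series b -> ex_series (fun n => Rabs (a n)).
Proof.
  intros Hab Hb. apply (@ex_series_le R_AbsRing R_CompleteNormedModule _ b); auto.
  intros n. change (norm (Rabs (a n))) with (Rabs (Rabs (a n))). rewrite Rabs_Rabsolu. apply Hab.
Qed.

Lemma Series_nonneg (a : nat -> R) : (forall n, 0 <= a n) -> ex_series a -> 0 <= Series a.
Proof.
  intros Ha Hs. apply Rle_trans with (Series (fun n => 0 * a n)).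
  - rewrite Series_scal_l. lra.
  - apply Series_le; auto. intros n. specialize (Ha n). lra.
Qed.

Lemma Series_ge_term (a : nat -> R) m :
  (forall n, 0 <= a n) -> ex_series a -> a m <= Series a.
Proof.
  intros Ha Hs. rewrite (Series_incr_n a (S m)) by (lia || auto). simpl pred.
  assert (Hsum : a m <= sum_f_R0 a m).
  { destruct m; simpl; [lra|].
    assert (0 <= sum_f_R0 a m) by (apply cond_pos_sum; auto). lra. }
  assert (0 <= Series (fun k => a (S m + k)%nat)).
  { apply Series_nonneg; auto. now apply (ex_series_incr_n a (S m)). }
  lra.
Qed.

Section SumsOverZ.
Implicit Types f g h : seqZ.

Lemma summableZ_le f g : (forall n, Rabs (g n) <= f n) -> summableZ f -> summableZ g.
Proof.
  intros H [H1 H2]. split.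
  - apply (ex_series_Rabs_le _ (fun k => Rabs (f (Z.of_nat k)))); auto.
    intros n; eapply Rle_trans; [apply H | apply Rle_abs].
  - apply (ex_series_Rabs_le _ (fun k => Rabs (f (- Z.of_nat (S k))%Z))); auto.
    intros n; eapply Rle_trans; [apply H | apply Rle_abs].
Qed.

Lemma summableZ_plus f g : summableZ f -> summableZ g -> summableZ (fun n => f n + g n).
Proof.
  intros [F1 F2] [G1 G2]. split.
  - apply (ex_series_Rabs_le _ (fun k => Rabs (f (Z.of_nat k)) + Rabs (g (Z.of_nat k)))).
    + intros; apply Rabs_triang.
    + exact (ex_series_plus _ _ F1 G1).
  - apply (ex_series_Rabs_le _
      (fun k => Rabs (f (- Z.of_nat (S k))%Z) + Rabs (g (- Z.of_nat (S k))%Z))).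
    + intros; apply Rabs_triang.
    + exact (ex_series_plus _ _ F2 G2).
Qed.

Lemma summableZ_scal k f : summableZ f -> summableZ (fun n => k * f n).
Proof.
  intros [F1 F2]. split.
  - apply (ex_series_Rabs_le _ (fun n => Rabs k * Rabs (f (Z.of_nat n)))).
    + intros; rewrite Rabs_mult; lra.
    + exact (ex_series_scal_l (Rabs k) _ F1).
  - apply (ex_series_Rabs_le _ (fun n => Rabs k * Rabs (f (- Z.of_nat (S n))%Z))).
    + intros; rewrite Rabs_mult; lra.
    + exact (ex_series_scal_l (Rabs k) _ F2).
Qed.

Lemma summableZ_abs f : summableZ f -> summableZ (fun n => Rabs (f n)).
Proof.
  intros [F1 F2]. split.
  - eapply ex_series_ext; [|exact F1]. intros; simpl; now rewrite Rabs_Rabsolu.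
  - eapply ex_series_ext; [|exact F2]. intros; simpl; now rewrite Rabs_Rabsolu.
Qed.

Lemma summableZ_ext f g : (forall n, f n = g n) -> summableZ f -> summableZ g.
Proof.
  intros H Hf. apply (summableZ_le (fun n => Rabs (f n))); [|now apply summableZ_abs].
  intros n; rewrite H; lra.
Qed.

Lemma summableZ_minus f g : summableZ f -> summableZ g -> summableZ (fun n => f n - g n).
Proof.
  intros Hf Hg. apply (summableZ_ext (fun n => f n + -1 * g n)); [intros; ring|].
  now apply summableZ_plus, summableZ_scal.
Qed.

Lemma sumZ_ext f g : (forall n, f n = g n) -> sumZ f = sumZ g.
Proof. intros H. unfold sumZ. now rewrite !(Series_ext _ _ (fun n => H _)). Qed.

Lemma sumZ_plus f g :
  summableZ f -> summableZ g -> sumZ (fun n => f n + g n) = sumZ f + sumZ g.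
Proof.
  intros [F1 F2] [G1 G2]. unfold sumZ.
  rewrite (Series_plus _ _ (ex_series_Rabs _ F1) (ex_series_Rabs _ G1)).
  rewrite (Series_plus _ _ (ex_series_Rabs _ F2) (ex_series_Rabs _ G2)). ring.
Qed.

Lemma sumZ_scal k f : sumZ (fun n => k * f n) = k * sumZ f.
Proof. unfold sumZ. rewrite !Series_scal_l. ring. Qed.

Lemma sumZ_minus f g :
  summableZ f -> summableZ g -> sumZ (fun n => f n - g n) = sumZ f - sumZ g.
Proof.
  intros Hf Hg. rewrite (sumZ_ext _ (fun n => f n + -1 * g n)) by (intros; ring).
  rewrite sumZ_plus, sumZ_scal by (auto using summableZ_scal). ring.
Qed.

Lemma sumZ_nonneg f : (forall n, 0 <= f n) -> summableZ f -> 0 <= sumZ f.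
Proof.
  intros H [F1 F2]. unfold sumZ.
  pose proof (Series_nonneg _ (fun n => H _) (ex_series_Rabs _ F1)).
  pose proof (Series_nonneg _ (fun n => H _) (ex_series_Rabs _ F2)). lra.
Qed.

Lemma sumZ_le f g :
  (forall n, f n <= g n) -> summableZ f -> summableZ g -> sumZ f <= sumZ g.
Proof.
  intros H Hf Hg.
  assert (0 <= sumZ (fun n => g n - f n)).
  { apply sumZ_nonneg; [intros n; specialize (H n); lra | now apply summableZ_minus]. }
  rewrite sumZ_minus in H0; auto. lra.
Qed.

Lemma sumZ_ge_term f m : (forall n, 0 <= f n) -> summableZ f -> f m <= sumZ f.
Proof.
  intros H [F1 F2]. unfold sumZ.
  pose proof (Series_nonneg _ (fun n => H _) (ex_series_Rabs _ F1)).
  pose proof (Series_nonneg _ (fun n => H _) (ex_series_Rabs _ F2)).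
  destruct (Z_le_gt_dec 0 m).
  - pose proof (Series_ge_term (fun k => f (Z.of_nat k)) (Z.to_nat m)
                  (fun n => H _) (ex_series_Rabs _ F1)) as Hm.
    cbv beta in Hm. rewrite Z2Nat.id in Hm by lia. lra.
  - pose proof (Series_ge_term (fun k => f (- Z.of_nat (S k))%Z) (Z.to_nat (- m - 1))
                  (fun n => H _) (ex_series_Rabs _ F2)) as Hm.
    cbv beta in Hm. replace (- Z.of_nat (S (Z.to_nat (- m - 1))))%Z with m in Hm by lia. lra.
Qed.

Lemma sumZ_dist_le f g h K :
  summableZ f -> summableZ g -> summableZ h -> 0 <= K ->
  (forall n, Rabs (f n - g n) <= K * h n) -> Rabs (sumZ f - sumZ g) <= K * sumZ h.
Proof.
  intros Hf Hg Hh HK H. rewrite <- sumZ_minus, <- sumZ_scal by auto.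
  assert (Hd : summableZ (fun n => f n - g n)) by now apply summableZ_minus.
  assert (HKh : summableZ (fun n => K * h n)) by now apply summableZ_scal.
  apply Rabs_le. split.
  - assert (sumZ (fun n => -1 * (K * h n)) <= sumZ (fun n => f n - g n)).
    { apply sumZ_le; auto using summableZ_scal.
      intros n. specialize (H n). apply Rabs_le_between in H. lra. }
    rewrite sumZ_scal in H0. lra.
  - apply sumZ_le; auto. intros n. specialize (H n). apply Rabs_le_between in H. lra.
Qed.

End SumsOverZ.

Lemma exp_le_compat x y : x <= y -> exp x <= exp y.
Proof. intros [H | ->]; [left; now apply exp_increasing | lra]. Qed.

Section RealPower.
Implicit Types x y s a : R.

Lemma rpow_Rpower x a : 0 < x -> rpow x a = Rpower x a.
Proof. intros H. unfold rpow. destruct (Rlt_dec 0 x); [auto | lra]. Qed.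

Lemma rpow_exp x a : 0 < x -> rpow x a = exp (a * ln x).
Proof. apply rpow_Rpower. Qed.

Lemma rpow_0_l a : rpow 0 a = 0.
Proof. unfold rpow. destruct (Rlt_dec 0 0); [lra | auto]. Qed.

Lemma rpow_nonneg x a : 0 <= rpow x a.
Proof. unfold rpow. destruct (Rlt_dec 0 x); [left; apply exp_pos | lra]. Qed.

Lemma rpow_gt0 x a : 0 < x -> 0 < rpow x a.
Proof. intros. rewrite rpow_exp by auto. apply exp_pos. Qed.

Lemma rpow_1_l a : rpow 1 a = 1.
Proof. rewrite rpow_exp, ln_1, Rmult_0_r by lra. apply exp_0. Qed.

Lemma rpow_mult s x a : 0 <= s -> 0 <= x -> rpow (s * x) a = rpow s a * rpow x a.
Proof.
  intros Hs Hx. destruct (Req_dec s 0) as [->|]; [now rewrite Rmult_0_l, rpow_0_l, Rmult_0_l|].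
  destruct (Req_dec x 0) as [->|]; [now rewrite Rmult_0_r, rpow_0_l, Rmult_0_r|].
  rewrite !rpow_Rpower by nra. rewrite Rpower_mult_distr; lra.
Qed.

Lemma rpow_abs_mult s x a : 0 <= s -> rpow (Rabs (s * x)) a = rpow s a * rpow (Rabs x) a.
Proof.
  intros. rewrite Rabs_mult, (Rabs_right s) by lra. apply rpow_mult; [lra | apply Rabs_pos].
Qed.

Lemma rpow_pow x n : 0 <= x -> (0 < n)%nat -> rpow x (INR n) = x ^ n.
Proof.
  intros Hx Hn. destruct (Req_dec x 0) as [->|].
  - rewrite rpow_0_l, pow_i; auto.
  - rewrite rpow_Rpower by lra. apply Rpower_pow; lra.
Qed.

Lemma ln_rpow x a : 0 < x -> ln (rpow x a) = a * ln x.
Proof. intros. rewrite rpow_Rpower by auto. apply ln_Rpower. Qed.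

Lemma rpow_le x y a : 0 <= x <= y -> 0 <= a -> rpow x a <= rpow y a.
Proof.
  intros [H1 H2] Ha. destruct (Req_dec x 0) as [->|].
  - rewrite rpow_0_l. apply rpow_nonneg.
  - rewrite !rpow_Rpower by lra. apply Rle_Rpower_l; lra.
Qed.

Lemma rpow_inv_rpow x p : 0 < p -> 0 <= x -> rpow (rpow x (1 / p)) p = x.
Proof.
  intros Hp Hx. destruct (Req_dec x 0) as [->|]; [now rewrite !rpow_0_l|].
  rewrite (rpow_Rpower x), rpow_Rpower by (try apply exp_pos; lra).
  rewrite Rpower_mult. replace (1 / p * p) with 1 by (field; lra). apply Rpower_1; lra.
Qed.

Lemma rpow_abs_sqr z a : rpow (Rabs z) (a - 2) * z * z = rpow (Rabs z) a.
Proof.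
  destruct (Req_dec z 0) as [->|Hz]; [rewrite Rabs_R0, !rpow_0_l; ring|].
  assert (0 < Rabs z) by now apply Rabs_pos_lt.
  rewrite !rpow_Rpower by auto.
  replace a with ((a - 2) + INR 2) at 2 by (simpl; ring).
  rewrite Rpower_plus, Rpower_pow, Rmult_assoc by auto.
  now rewrite <- Rsqr_pow2, <- Rsqr_abs.
Qed.

End RealPower.

Section EvenPower.
Variable m : nat.
Hypothesis m_odd : Nat.Odd m.

Lemma pow_sign_even e z : e * e = 1 -> (e * z) ^ S m = z ^ S m.
Proof.
  intros He. destruct m_odd as [k ->].
  replace (S (2 * k + 1)) with (2 * S k)%nat by lia.
  rewrite Rpow_mult_distr, pow_mult, pow_mult. simpl (e ^ 2). rewrite Rmult_1_r, He, pow1. ring.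
Qed.

Lemma pow_sign_odd e z w : e * e = 1 -> (e * z) ^ m * (e * w) = z ^ m * w.
Proof.
  intros He. rewrite Rpow_mult_distr.
  replace (e ^ m * z ^ m * (e * w)) with (e ^ S m * (z ^ m * w)) by (simpl; ring).
  rewrite <- (Rmult_1_r e) at 1. rewrite pow_sign_even by auto. rewrite pow1. ring.
Qed.

Lemma pow_even_nonneg z : 0 <= z ^ S m.
Proof.
  destruct (Rle_dec 0 z); [now apply pow_le|].
  rewrite <- (pow_sign_even (-1)) by ring. apply pow_le. lra.
Qed.

Lemma pow_even_pos z : z <> 0 -> 0 < z ^ S m.
Proof.
  intros Hz. destruct (Rle_dec 0 z); [apply pow_lt; lra|].
  rewrite <- (pow_sign_even (-1)) by ring. apply pow_lt. lra.
Qed.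

Lemma rpow_abs_even z : rpow (Rabs z) (INR (S m)) = z ^ S m.
Proof.
  rewrite rpow_pow by (apply Rabs_pos || lia).
  destruct (Rle_dec 0 z); [now rewrite Rabs_right by lra|].
  rewrite Rabs_left by lra. replace (- z) with (-1 * z) by ring. apply pow_sign_even. ring.
Qed.

Lemma rpow_abs_odd z : rpow (Rabs z) (INR (S m) - 2) * z = z ^ m.
Proof.
  destruct (Req_dec z 0) as [->|Hz].
  - destruct m; [destruct m_odd; lia|]. simpl. ring.
  - apply (Rmult_eq_reg_r z); auto.
    rewrite rpow_abs_sqr, rpow_abs_even. simpl. ring.
Qed.

End EvenPower.

Lemma exp_convex l x y :
  0 <= l <= 1 -> exp (l * x + (1 - l) * y) <= l * exp x + (1 - l) * exp y.
Proof.
  intros Hl. set (z := l * x + (1 - l) * y).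
  assert (Ex : exp x = exp z * exp (x - z)) by (rewrite <- exp_plus; f_equal; ring).
  assert (Ey : exp y = exp z * exp (y - z)) by (rewrite <- exp_plus; f_equal; ring).
  pose proof (exp_ineq1_le (x - z)). pose proof (exp_ineq1_le (y - z)). pose proof (exp_pos z).
  rewrite Ex, Ey.
  assert (exp z * (1 + (x - z)) <= exp z * exp (x - z)) by (apply Rmult_le_compat_l; lra).
  assert (exp z * (1 + (y - z)) <= exp z * exp (y - z)) by (apply Rmult_le_compat_l; lra).
  assert (l * (exp z * (1 + (x - z))) + (1 - l) * (exp z * (1 + (y - z))) = exp z)
    by (unfold z; ring).
  nra.
Qed.

Lemma one_sub_rpow_div_le s p q :
  0 <= s -> 0 < p -> p < q -> (1 - rpow s q) / q <= (1 - rpow s p) / p.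
Proof.
  intros Hs Hp Hpq. destruct (Req_dec s 0) as [->|].
  { rewrite !rpow_0_l. apply Rmult_le_compat_l; [lra|]. apply Rinv_le_contravar; lra. }
  rewrite !rpow_exp by lra.
  assert (Hconv : exp (p * ln s) <= p / q * exp (q * ln s) + (1 - p / q) * 1).
  { pose proof (exp_convex (p / q) (q * ln s) 0) as H0. rewrite exp_0 in H0.
    replace (p / q * (q * ln s) + (1 - p / q) * 0) with (p * ln s) in H0 by (field; lra).
    apply H0. split; [apply Rdiv_le_0_compat; lra|].
    apply (Rmult_le_reg_r q); [lra|]. unfold Rdiv. rewrite Rmult_assoc, Rinv_l; lra. }
  apply (Rmult_le_reg_r (p * q)); [nra|].
  replace ((1 - exp (q * ln s)) / q * (p * q)) with (p - p * exp (q * ln s)) by (field; lra).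
  replace ((1 - exp (p * ln s)) / p * (p * q)) with (q - q * exp (p * ln s)) by (field; lra).
  apply (Rmult_le_compat_l q) in Hconv; [|lra].
  replace (q * (p / q * exp (q * ln s) + (1 - p / q) * 1))
    with (p * exp (q * ln s) + q - p) in Hconv by (field; lra).
  lra.
Qed.

Lemma one_sub_rpow_add_ln_nonneg s q : 0 <= s -> 0 <= 1 - rpow s q + q * rpow s q * ln s.
Proof.
  intros Hs. destruct (Req_dec s 0) as [->|]; [rewrite rpow_0_l; lra|].
  set (y := rpow s q). assert (Hy : 0 < y) by (apply rpow_gt0; lra).
  replace (q * y * ln s) with (y * ln y) by (unfold y; rewrite ln_rpow by lra; ring).
  pose proof (exp_ineq1_le (ln (/ y))) as Hln.
  rewrite exp_ln in Hln by (now apply Rinv_0_lt_compat). rewrite ln_Rinv in Hln by auto.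
  apply (Rmult_le_compat_l y) in Hln; [|lra].
  rewrite Rmult_plus_distr_l, Rinv_r in Hln by lra. lra.
Qed.

Section PowerInequalities.
Variable m : nat.
Local Notation P := (S m).

Lemma pow_mean_le s t x y : 0 <= s -> 0 <= t -> 0 <= x -> 0 <= y ->
  (s * x + t * y) ^ P <= (x + y) ^ m * (s ^ P * x + t ^ P * y).
Proof.
  intros Hs Ht Hx Hy. induction m as [|k IH]; [simpl; lra|].
  assert (Hsx : 0 <= s * x + t * y) by nra.
  assert (Hk : 0 <= (x + y) ^ k) by (apply pow_le; lra).
  assert (Hst : 0 <= (s - t) * (s ^ S k - t ^ S k)).
  { destruct (Rle_dec s t).
    - assert (s ^ S k <= t ^ S k) by (apply pow_incr; lra). nra.
    - assert (t ^ S k <= s ^ S k) by (apply pow_incr; lra). nra. }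
  apply Rle_trans with ((s * x + t * y) * ((x + y) ^ k * (s ^ S k * x + t ^ S k * y))).
  - change ((s * x + t * y) ^ S (S k)) with ((s * x + t * y) * (s * x + t * y) ^ S k).
    now apply Rmult_le_compat_l.
  - assert (0 <= (x + y) ^ k * (x * y * ((s - t) * (s ^ S k - t ^ S k))))
      by (apply Rmult_le_pos; [|apply Rmult_le_pos]; nra).
    assert ((x + y) ^ S k * (s ^ S (S k) * x + t ^ S (S k) * y)
            - (s * x + t * y) * ((x + y) ^ k * (s ^ S k * x + t ^ S k * y))
            = (x + y) ^ k * (x * y * ((s - t) * (s ^ S k - t ^ S k)))) by (simpl; ring).
    lra.
Qed.

Lemma pow_tangent_le x y : 0 <= x -> 0 <= y -> x ^ P + INR P * x ^ m * (y - x) <= y ^ P.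
Proof.
  intros Hx Hy. induction m as [|k IH]; [simpl; lra|].
  assert (0 <= y * (y ^ S k - (x ^ S k + INR (S k) * x ^ k * (y - x))))
    by (apply Rmult_le_pos; lra).
  assert (0 <= INR (S k) * x ^ k * ((y - x) * (y - x))).
  { apply Rmult_le_pos; [apply Rmult_le_pos; [apply pos_INR | now apply pow_le]|].
    apply Rle_0_sqr. }
  assert (y ^ S (S k) - (x ^ S (S k) + INR (S (S k)) * x ^ S k * (y - x))
          = y * (y ^ S k - (x ^ S k + INR (S k) * x ^ k * (y - x)))
            + INR (S k) * x ^ k * ((y - x) * (y - x))) by (rewrite (S_INR (S k)); simpl; ring).
  lra.
Qed.

Lemma pow_lipschitz x y M : 0 <= x <= M -> 0 <= y <= M ->
  Rabs (x ^ P - y ^ P) <= INR P * M ^ m * Rabs (x - y).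
Proof.
  intros Hx Hy. induction m as [|k IH]; [simpl; rewrite !Rmult_1_r; lra|].
  replace (x ^ S (S k) - y ^ S (S k)) with (x * (x ^ S k - y ^ S k) + y ^ S k * (x - y))
    by (simpl; ring).
  eapply Rle_trans; [apply Rabs_triang|]. rewrite !Rabs_mult.
  assert (y ^ S k <= M ^ S k) by (apply pow_incr; lra).
  assert (0 <= y ^ S k) by (apply pow_le; lra).
  rewrite (Rabs_right x), (Rabs_right (y ^ S k)) by lra.
  assert (0 <= Rabs (x - y)) by apply Rabs_pos.
  assert (0 <= M ^ k) by (apply pow_le; lra).
  assert (x * Rabs (x ^ S k - y ^ S k) <= M * (INR (S k) * M ^ k * Rabs (x - y)))
    by (apply Rmult_le_compat; try lra; apply Rabs_pos).
  rewrite (S_INR (S k)). simpl in *. nra.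
Qed.

End PowerInequalities.

Lemma same_sign_flip X Y : 0 <= X * Y ->
  exists e x y, e * e = 1 /\ 0 <= x /\ 0 <= y /\ X = e * x /\ Y = e * y.
Proof.
  intros H. destruct (Rle_dec 0 X), (Rle_dec 0 Y).
  - exists 1, X, Y. repeat split; lra.
  - destruct (Req_dec X 0) as [->|]; [exists (-1), 0, (- Y); repeat split; lra | nra].
  - destruct (Req_dec Y 0) as [->|]; [exists (-1), (- X), 0; repeat split; lra | nra].
  - exists (-1), (- X), (- Y). repeat split; lra.
Qed.

Lemma same_sign_linear_forms X Y s t s' t' : 0 <= X * Y ->
  0 <= s -> 0 <= t -> 0 <= s' -> 0 <= t' -> 0 <= (s * X + t * Y) * (s' * X + t' * Y).
Proof.
  intros H Hs Ht Hs' Ht'.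
  replace ((s * X + t * Y) * (s' * X + t' * Y))
    with (s * s' * (X * X) + (s * t' + t * s') * (X * Y) + t * t' * (Y * Y)) by ring.
  assert (0 <= X * X) by apply Rle_0_sqr. assert (0 <= Y * Y) by apply Rle_0_sqr.
  assert (0 <= s * s' * (X * X)) by (apply Rmult_le_pos; nra).
  assert (0 <= t * t' * (Y * Y)) by (apply Rmult_le_pos; nra).
  assert (0 <= (s * t' + t * s') * (X * Y)) by (apply Rmult_le_pos; nra).
  lra.
Qed.

Section SameSign.
Variable m : nat.
Hypothesis m_odd : Nat.Odd m.
Local Notation P := (S m).

(* Every expression below is a [P]-th power or a product [z ^ m * w] of linear forms in
   [X] and [Y]; both are invariant under the sign flip, which reduces to [X, Y >= 0]. *)
Ltac flip H :=
  let e := fresh "e" in let x := fresh "x" in let y := fresh "y" in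
  destruct (same_sign_flip _ _ H) as (e & x & y & ? & ? & ? & -> & ->).

Lemma pow_even_tangent_le x y : 0 <= x * y -> x ^ P + INR P * x ^ m * (y - x) <= y ^ P.
Proof.
  intros H. flip H.
  replace (INR P * (e * x0) ^ m * (e * y0 - e * x0))
    with (INR P * ((e * x0) ^ m * (e * (y0 - x0)))) by ring.
  rewrite !pow_sign_even, pow_sign_odd by auto. rewrite <- Rmult_assoc.
  now apply pow_tangent_le.
Qed.

Lemma pow_even_linear_mono X Y s s' t t' : 0 <= X * Y -> 0 <= s <= s' -> 0 <= t <= t' ->
  (s * X + t * Y) ^ P <= (s' * X + t' * Y) ^ P.
Proof.
  intros H Hs Ht. flip H.
  replace (s * (e * x) + t * (e * y)) with (e * (s * x + t * y)) by ring.
  replace (s' * (e * x) + t' * (e * y)) with (e * (s' * x + t' * y)) by ring.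
  rewrite !pow_sign_even by auto. apply pow_incr. nra.
Qed.

Lemma pow_even_linear_le_max X Y s t : 0 <= X * Y -> 0 <= s -> 0 <= t ->
  (s * X + t * Y) ^ P <= Rmax s t ^ P * (X + Y) ^ P.
Proof.
  intros H Hs Ht. flip H.
  replace (s * (e * x) + t * (e * y)) with (e * (s * x + t * y)) by ring.
  replace (e * x + e * y) with (e * (x + y)) by ring.
  rewrite !pow_sign_even, <- Rpow_mult_distr by auto. apply pow_incr.
  pose proof (Rmax_l s t). pose proof (Rmax_r s t). nra.
Qed.

Lemma pow_odd_linear_part_bound X Y s t : 0 <= X * Y -> 0 <= s -> 0 <= t ->
  0 <= (s * X + t * Y) ^ m * (s * X) <= Rmax s t ^ P * (X + Y) ^ P.
Proof.
  intros H Hs Ht. flip H.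
  pose proof (pow_even_linear_le_max x y s t ltac:(nra) Hs Ht) as Hmax.
  replace (s * (e * x) + t * (e * y)) with (e * (s * x + t * y)) by ring.
  replace (e * x + e * y) with (e * (x + y)) by ring.
  replace (s * (e * x)) with (e * (s * x)) by ring.
  rewrite pow_sign_even, pow_sign_odd by auto.
  assert (0 <= (s * x + t * y) ^ m) by (apply pow_le; nra).
  assert ((s * x + t * y) ^ P = (s * x + t * y) ^ m * (s * x + t * y)) by (simpl; ring).
  assert ((s * x + t * y) ^ m * (s * x) <= (s * x + t * y) ^ m * (s * x + t * y))
    by (apply Rmult_le_compat_l; nra).
  split; [apply Rmult_le_pos; nra | lra].
Qed.

Lemma pow_even_linear_lipschitz X Y s s' t t' M : 0 <= X * Y ->
  0 <= s <= M -> 0 <= s' <= M -> 0 <= t <= M -> 0 <= t' <= M ->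
  Rabs ((s * X + t * Y) ^ P - (s' * X + t' * Y) ^ P)
  <= INR P * M ^ m * (Rabs (s - s') + Rabs (t - t')) * (X + Y) ^ P.
Proof.
  intros H Hs Hs' Ht Ht'. flip H.
  replace (s * (e * x) + t * (e * y)) with (e * (s * x + t * y)) by ring.
  replace (s' * (e * x) + t' * (e * y)) with (e * (s' * x + t' * y)) by ring.
  replace (e * x + e * y) with (e * (x + y)) by ring.
  rewrite !pow_sign_even by auto.
  eapply Rle_trans; [apply (pow_lipschitz m _ _ (M * (x + y))); split; nra|].
  assert (Hd : Rabs (s * x + t * y - (s' * x + t' * y))
               <= (Rabs (s - s') + Rabs (t - t')) * (x + y)).
  { replace (s * x + t * y - (s' * x + t' * y)) with ((s - s') * x + (t - t') * y) by ring.
    eapply Rle_trans; [apply Rabs_triang|].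
    rewrite !Rabs_mult, (Rabs_right x), (Rabs_right y) by lra.
    pose proof (Rabs_pos (s - s')). pose proof (Rabs_pos (t - t')). nra. }
  set (K := INR P * (M ^ m * (x + y) ^ m)).
  assert (HK : 0 <= K)
    by (apply Rmult_le_pos; [apply pos_INR | apply Rmult_le_pos; apply pow_le; lra]).
  apply (Rmult_le_compat_l K) in Hd; auto.
  replace (INR P * (M * (x + y)) ^ m * Rabs (s * x + t * y - (s' * x + t' * y)))
    with (K * Rabs (s * x + t * y - (s' * x + t' * y)))
    by (unfold K; rewrite Rpow_mult_distr; ring).
  replace (INR P * M ^ m * (Rabs (s - s') + Rabs (t - t')) * (x + y) ^ P)
    with (K * ((Rabs (s - s') + Rabs (t - t')) * (x + y))) by (unfold K; simpl; ring).
  exact Hd.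
Qed.

Lemma pow_even_nehari_ineq X Y s t Ks Kt : 0 <= X * Y -> 0 <= s -> 0 <= t ->
  Ks <= (1 - s ^ P) / INR P -> Kt <= (1 - t ^ P) / INR P ->
  0 <= ((X + Y) ^ P - (s * X + t * Y) ^ P) / INR P
       - Ks * ((X + Y) ^ m * X) - Kt * ((X + Y) ^ m * Y).
Proof.
  intros H Hs Ht HKs HKt. flip H.
  replace (s * (e * x) + t * (e * y)) with (e * (s * x + t * y)) by ring.
  replace (e * x + e * y) with (e * (x + y)) by ring.
  rewrite !pow_sign_even, !pow_sign_odd by auto.
  pose proof (pow_mean_le m s t x y Hs Ht ltac:(lra) ltac:(lra)) as J.
  assert (HP : 0 < INR P) by (apply lt_0_INR; lia).
  assert (0 <= (x + y) ^ m) by (apply pow_le; lra).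
  assert (0 <= (x + y) ^ m * x * ((1 - s ^ P) / INR P - Ks)) by (apply Rmult_le_pos; nra).
  assert (0 <= (x + y) ^ m * y * ((1 - t ^ P) / INR P - Kt)) by (apply Rmult_le_pos; nra).
  assert (0 <= ((x + y) ^ m * (s ^ P * x + t ^ P * y) - (s * x + t * y) ^ P) / INR P)
    by (apply Rdiv_le_0_compat; lra).
  assert (((x + y) ^ P - (x + y) ^ m * (s ^ P * x + t ^ P * y)) / INR P
          - Ks * ((x + y) ^ m * x) - Kt * ((x + y) ^ m * y)
          = (x + y) ^ m * x * ((1 - s ^ P) / INR P - Ks)
            + (x + y) ^ m * y * ((1 - t ^ P) / INR P - Kt)).
  { change ((x + y) ^ P) with ((x + y) * (x + y) ^ m). field. lra. }
  unfold Rdiv in *. lra.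
Qed.

End SameSign.

Definition powlog (q A B x : R) : R := rpow x q * (A - B * ln x).

Section PowLog.
Variables q A B : R.
Hypotheses (q_pos : 0 < q) (B_pos : 0 < B).

Lemma powlog_0 : powlog q A B 0 = 0.
Proof. unfold powlog. rewrite rpow_0_l. ring. Qed.

Lemma powlog_exp x : 0 < x -> powlog q A B x = exp (q * ln x) * (A - B * ln x).
Proof. intros. unfold powlog. now rewrite rpow_exp. Qed.

Lemma is_derive_powlog x : 0 < x ->
  is_derive (powlog q A B) x (rpow x q / x * (q * A - B - q * B * ln x)).
Proof.
  intros Hx. apply (is_derive_ext_loc (fun y => exp (q * ln y) * (A - B * ln y))).
  - exists (mkposreal x Hx). intros y Hy. symmetry. apply powlog_exp.
    change (Rabs (y - x) < x) in Hy. apply Rabs_lt_between in Hy. lra.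
  - rewrite rpow_exp by auto. auto_derive; [tauto|]. field. lra.
Qed.

Lemma ex_derive_powlog x : 0 < x -> ex_derive (powlog q A B) x.
Proof. intros Hx. eexists. now apply is_derive_powlog. Qed.

Lemma continuity_pt_powlog x : 0 < x -> continuity_pt (powlog q A B) x.
Proof.
  intros Hx. apply continuity_pt_filterlim, (ex_derive_continuous (powlog q A B)).
  now apply ex_derive_powlog.
Qed.

Lemma powlog_nondecreasing_near_0 : exists d, 0 < d <= 1 /\
  forall x x', 0 <= x -> x <= x' -> x' <= d -> powlog q A B x <= powlog q A B x'.
Proof.
  set (d0 := exp (A / B - 1 / q)).
  assert (Hd0 : 0 < d0) by apply exp_pos.
  assert (Hsmall : forall x, 0 < x < d0 -> ln x < A / B - 1 / q).
  { intros x Hx. unfold d0 in Hx. rewrite <- (ln_exp (A / B - 1 / q)). now apply ln_increasing. }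
  exists (Rmin 1 (d0 / 2)). split; [split; [apply Rmin_glb_lt|apply Rmin_l]; lra|].
  intros x x' Hx Hxx' Hx'. pose proof (Rmin_r 1 (d0 / 2)).
  destruct (Req_dec x x') as [->|Hne]; [lra|].
  destruct (Req_dec x 0) as [->|].
  - rewrite powlog_0. apply Rmult_le_pos; [apply rpow_nonneg|].
    pose proof (Hsmall x' ltac:(lra)) as Hln. apply (Rmult_lt_compat_l B) in Hln; auto.
    replace (B * (A / B - 1 / q)) with (A - B / q) in Hln by (field; lra).
    assert (0 < B / q) by (apply Rdiv_lt_0_compat; lra). lra.
  - left. apply (incr_function _ 0 d0 (fun y => rpow y q / y * (q * A - B - q * B * ln y)));
      simpl; try lra.
    + intros y Hy Hy'. now apply is_derive_powlog.
    + intros y Hy Hy'. apply Rmult_gt_0_compat.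
      * apply Rdiv_lt_0_compat; [now apply rpow_gt0 | auto].
      * pose proof (Hsmall y ltac:(lra)) as Hln. apply (Rmult_lt_compat_l (q * B)) in Hln; [|nra].
        replace (q * B * (A / B - 1 / q)) with (q * A - B) in Hln by (field; lra). lra.
Qed.

Lemma powlog_dominates_pow C n : 0 <= C -> INR n <= q -> forall K,
  exists R, 1 <= R /\ forall x, R <= x -> C * x ^ n + powlog q A B x <= - K.
Proof.
  intros HC Hn K. set (y0 := (C + Rabs A + Rabs K + 1) / B).
  assert (Hy0 : 0 <= y0) by (apply Rdiv_le_0_compat; pose proof (Rabs_pos A);
                              pose proof (Rabs_pos K); lra).
  exists (exp y0). split; [pose proof (exp_ineq1_le y0); lra|].
  intros x Hx. assert (Hx0 : 0 < x) by (pose proof (exp_pos y0); lra).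
  assert (Hy : y0 <= ln x) by (rewrite <- (ln_exp y0); apply ln_le; [apply exp_pos | auto]).
  assert (HBy : C + Rabs A + Rabs K + 1 <= B * ln x).
  { apply (Rmult_le_compat_l B) in Hy; [|lra].
    replace (B * y0) with (C + Rabs A + Rabs K + 1) in Hy by (unfold y0; field; lra). auto. }
  assert (Hxq : x ^ n <= rpow x q).
  { rewrite rpow_exp, <- Rpower_pow by auto. apply exp_le_compat, Rmult_le_compat_r; lra. }
  assert (H1 : 1 <= rpow x q).
  { rewrite rpow_exp by auto. rewrite <- exp_0. apply exp_le_compat, Rmult_le_pos; lra. }
  pose proof (Rle_abs A). pose proof (Rle_abs K). pose proof (Rabs_pos K).
  unfold powlog.
  assert (C * x ^ n <= C * rpow x q) by (apply Rmult_le_compat_l; auto).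
  assert (rpow x q * (C + A - B * ln x) <= rpow x q * (- (Rabs K + 1)))
    by (apply Rmult_le_compat_l; lra).
  assert (1 * (Rabs K + 1) <= rpow x q * (Rabs K + 1)) by (apply Rmult_le_compat_r; lra).
  lra.
Qed.

Lemma powlog_bounded_above : exists M, forall x, 0 <= x -> powlog q A B x <= M.
Proof.
  destruct (powlog_dominates_pow 0 0 ltac:(lra) ltac:(simpl; lra) 0) as [R [HR Hlarge]].
  exists (Rabs A + B / q + rpow R q * Rabs A). intros x Hx.
  pose proof (Rabs_pos A). pose proof (Rle_abs A). pose proof (rpow_nonneg R q).
  assert (0 <= B / q) by (apply Rdiv_le_0_compat; lra).
  assert (0 <= rpow R q * Rabs A) by (apply Rmult_le_pos; lra).
  destruct (Rle_dec R x) as [HRx|HRx].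
  { specialize (Hlarge x HRx). lra. }
  destruct (Req_dec x 0) as [->|Hx0]; [rewrite powlog_0; lra|].
  pose proof (rpow_nonneg x q) as Hpos. unfold powlog.
  destruct (Rle_dec x 1).
  - assert (Hln : ln x <= 0) by (rewrite <- ln_1; apply ln_le; lra).
    assert (rpow x q <= 1) by (rewrite <- (rpow_1_l q); apply rpow_le; lra).
    pose proof (one_sub_rpow_add_ln_nonneg x q Hx) as Hent.
    assert (Hxl : rpow x q * - ln x <= 1 / q).
    { apply (Rmult_le_reg_l q); [lra|]. replace (q * (1 / q)) with 1 by (field; lra). lra. }
    assert (B * (rpow x q * - ln x) <= B * (1 / q)) by (apply Rmult_le_compat_l; lra).
    assert (rpow x q * A <= Rabs A) by nra. unfold Rdiv in *. lra.
  - assert (Hln : 0 <= ln x) by (rewrite <- ln_1; apply ln_le; lra).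
    assert (rpow x q <= rpow R q) by (apply rpow_le; lra).
    assert (rpow x q * (B * ln x) >= 0) by (apply Rle_ge, Rmult_le_pos; nra).
    assert (rpow x q * A <= rpow R q * Rabs A) by nra. nra.
Qed.

Lemma pow_add_powlog_root N n : 0 < N -> INR n <= q ->
  exists z, 0 < z /\ N * z ^ n + powlog q A B z = 0.
Proof.
  intros HN Hn. set (g := fun t => N * t ^ n + powlog q A B t).
  destruct (powlog_dominates_pow N n (Rlt_le _ _ HN) Hn 1) as [T [HT Hlarge]].
  set (e := exp (A / B - 1)). assert (He : 0 < e) by apply exp_pos.
  assert (Hge : 0 < g e).
  { unfold g, powlog. assert (0 < rpow e q * (A - B * ln e)).
    { apply Rmult_lt_0_compat; [now apply rpow_gt0|]. unfold e. rewrite ln_exp.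
      replace (A - B * (A / B - 1)) with B by (field; lra). auto. }
    assert (0 <= N * e ^ n) by (apply Rmult_le_pos; [lra | apply pow_le; lra]). lra. }
  assert (HeT : e < T).
  { destruct (Rlt_le_dec e T) as [|HTe]; [auto|]. specialize (Hlarge e HTe). unfold g in Hge. lra. }
  destruct (Ranalysis5.IVT_interv (fun t => - g t) e T) as [z [Hz Hgz]]; auto.
  - intros x Hx. apply (continuity_pt_filterlim (fun t => - g t) x).
    assert (Hd : ex_derive (fun t => - g t) x).
    { unfold g. auto_derive. exact (ex_derive_powlog x ltac:(lra)). }
    exact (ex_derive_continuous _ _ Hd).
  - lra.
  - specialize (Hlarge T (Rle_refl T)). unfold g. lra.
  - exists z. split; [lra|]. unfold g in Hgz. lra.
Qed.

End PowLog.

Lemma subgradient_max_derive (f : R -> R) E s0 d : 0 < s0 -> is_derive f s0 d ->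
  (forall x, 0 < x < 2 -> (x - 1) * E + f (x * s0) <= f s0) -> E + s0 * d = 0.
Proof.
  intros Hs0 Hf Hmax. set (g := fun x => (x - 1) * E + f (x * s0)).
  assert (Hg : derivable_pt_lim g 1 (E + s0 * d)).
  { apply is_derive_Reals. unfold g. apply (is_derive_plus (fun x => (x - 1) * E)).
    - auto_derive; [auto | ring].
    - apply (is_derive_comp f (fun x => x * s0)); [now rewrite Rmult_1_l|].
      auto_derive; [auto | ring]. }
  pose proof (deriv_maximum g 0 2 1 (exist _ _ Hg) ltac:(lra) ltac:(lra)) as H0. apply H0.
  intros x Hx0 Hx2. unfold g. rewrite Rmult_1_l. specialize (Hmax x (conj Hx0 Hx2)). lra.
Qed.

Lemma continuity_pt_eps (f : R -> R) x : continuity_pt f x <-> forall eps, 0 < eps ->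
  exists del, 0 < del /\ forall y, Rabs (y - x) < del -> Rabs (f y - f x) < eps.
Proof.
  unfold continuity_pt, continue_in, limit1_in, limit_in. simpl. unfold R_dist. split.
  - intros H eps Heps. destruct (H eps Heps) as [del [Hdel Hf]]. exists del. split; auto.
    intros y Hy. destruct (Req_dec y x) as [->|]; [rewrite Rminus_diag, Rabs_R0; auto|].
    apply Hf. repeat split; auto.
  - intros H eps Heps. destruct (H eps Heps) as [del [Hdel Hf]].
    exists del. split; auto. intros y [_ Hy]. auto.
Qed.

Section ExtremeValue2.
Variables (F : R -> R -> R) (lo hi : R).
Hypothesis lo_hi : lo <= hi.
Hypothesis F_cont_r : forall s t, lo <= s <= hi -> lo <= t <= hi -> continuity_pt (F s) t.
Hypothesis F_cont_l_unif : forall s, lo <= s <= hi -> forall eps, 0 < eps ->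
  exists del, 0 < del /\ forall s', lo <= s' <= hi -> Rabs (s' - s) < del ->
  forall t, lo <= t <= hi -> Rabs (F s' t - F s t) < eps.

Let clamp x := Rmax lo (Rmin hi x).

Let clamp_in x : lo <= clamp x <= hi.
Proof. unfold clamp, Rmax, Rmin. repeat destruct Rle_dec; lra. Qed.

Let clamp_id x : lo <= x <= hi -> clamp x = x.
Proof. intros. unfold clamp, Rmax, Rmin. repeat destruct Rle_dec; lra. Qed.

Let clamp_lipschitz x y : Rabs (clamp x - clamp y) <= Rabs (x - y).
Proof. unfold clamp, Rmax, Rmin. repeat destruct Rle_dec; split_Rabs; lra. Qed.

(* Maximise over [t] first: by the uniform continuity in [s],
   [x |-> max_t F (clamp x) t] is continuous on all of R and attains its maximum on [lo, hi]. *)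
Lemma continuity2_ab_maj : exists s0 t0, lo <= s0 <= hi /\ lo <= t0 <= hi /\
  forall s t, lo <= s <= hi -> lo <= t <= hi -> F s t <= F s0 t0.
Proof.
  assert (Hm : forall s, exists t, lo <= s <= hi ->
                 lo <= t <= hi /\ forall t', lo <= t' <= hi -> F s t' <= F s t).
  { intros s. destruct (Rle_dec lo s); [destruct (Rle_dec s hi)|].
    - destruct (continuity_ab_maj (F s) lo hi lo_hi) as [t [Ht1 Ht2]].
      + intros; apply F_cont_r; lra.
      + exists t. auto.
    - exists lo. intros; lra.
    - exists lo. intros; lra. }
  destruct (ClassicalEpsilon.choice _ Hm) as [tau Htau].
  set (psi := fun x => F (clamp x) (tau (clamp x))).
  assert (Hpsi : forall x, continuity_pt psi x).
  { intros x. apply continuity_pt_eps. intros eps Heps.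
    pose proof (clamp_in x) as Hs. set (s := clamp x) in *.
    destruct (F_cont_l_unif s Hs eps Heps) as [del [Hd Hdel]]. exists del. split; auto.
    intros x' Hx'. unfold psi. fold s. pose proof (clamp_in x') as Hs'. set (s' := clamp x') in *.
    assert (Hss : Rabs (s' - s) < del) by (eapply Rle_lt_trans; [apply clamp_lipschitz | auto]).
    destruct (Htau s Hs) as [T1 T2]. destruct (Htau s' Hs') as [T3 T4].
    pose proof (Hdel s' Hs' Hss (tau s) T1). pose proof (Hdel s' Hs' Hss (tau s') T3).
    pose proof (T2 (tau s') T3). pose proof (T4 (tau s) T1).
    split_Rabs; lra. }
  destruct (continuity_ab_maj psi lo hi lo_hi) as [s0 [H1 H2]]; [intros; apply Hpsi|].
  exists s0, (tau s0). destruct (Htau s0 H2) as [T1 T2]. split; [auto | split; [auto|]].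
  intros s t Hs Ht. specialize (H1 s Hs). unfold psi in H1. rewrite !clamp_id in H1 by auto.
  destruct (Htau s Hs) as [_ T4]. specialize (T4 t Ht). lra.
Qed.

End ExtremeValue2.

Lemma continuity_pt_lipschitz (f : R -> R) x K del : 0 < del ->
  (forall y, Rabs (y - x) < del -> Rabs (f y - f x) <= K * Rabs (y - x)) -> continuity_pt f x.
Proof.
  intros Hdel Hf. apply continuity_pt_eps. intros eps Heps.
  set (K' := Rabs K + 1). assert (HK' : 0 < K') by (unfold K'; pose proof (Rabs_pos K); lra).
  exists (Rmin del (eps / K')). split; [apply Rmin_glb_lt; [lra | apply Rdiv_lt_0_compat; lra]|].
  intros y Hy. pose proof (Rmin_l del (eps / K')). pose proof (Rmin_r del (eps / K')).
  eapply Rle_lt_trans; [apply Hf; lra|].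
  apply Rle_lt_trans with (K' * Rabs (y - x)).
  - apply Rmult_le_compat_r; [apply Rabs_pos | pose proof (Rle_abs K); unfold K'; lra].
  - apply (Rmult_lt_reg_l (/ K')); [now apply Rinv_0_lt_compat|].
    rewrite <- Rmult_assoc, Rinv_l, Rmult_1_l by lra. rewrite Rmult_comm. unfold Rdiv in *. lra.
Qed.

Definition sign_comb (u : seqZ) (s t : R) : seqZ := addZ (scalZ s (upos u)) (scalZ t (uneg u)).

Section SignDecomposition.
Implicit Types u v : seqZ.

Lemma seqZ_nonzero v : v <> zeroZ -> exists n, v n <> 0.
Proof.
  intros Hv. apply NNPP. intros Hall. apply Hv, functional_extensionality. intros n.
  apply NNPP. intros Hn. apply Hall. now exists n.
Qed.

Lemma scalZ_nonzero s v : s <> 0 -> v <> zeroZ -> scalZ s v <> zeroZ.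
Proof.
  intros Hs Hv H. destruct (seqZ_nonzero v Hv) as [n Hn].
  apply (f_equal (fun g => g n)) in H. unfold scalZ, zeroZ in H.
  apply Rmult_integral in H. tauto.
Qed.

Lemma upos_uneg_cases u n :
  (upos u n = u n /\ uneg u n = 0 /\ 0 <= u n) \/ (upos u n = 0 /\ uneg u n = u n /\ u n <= 0).
Proof.
  unfold upos, uneg. destruct (Rle_dec 0 (u n)).
  - left. rewrite Rmax_left, Rmin_right by lra. auto.
  - right. rewrite Rmax_right, Rmin_left by lra. split; [auto | split; [auto | lra]].
Qed.

Lemma upos_part u n : upos u n = 0 \/ upos u n = u n.
Proof. destruct (upos_uneg_cases u n) as [(-> & _)|(-> & _)]; auto. Qed.

Lemma uneg_part u n : uneg u n = 0 \/ uneg u n = u n.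
Proof. destruct (upos_uneg_cases u n) as [(_ & -> & _)|(_ & -> & _)]; auto. Qed.

Lemma upos_add_uneg u n : upos u n + uneg u n = u n.
Proof. destruct (upos_uneg_cases u n) as [(-> & -> & _)|(-> & -> & _)]; ring. Qed.

Lemma upos_mul_uneg u n : upos u n * uneg u n = 0.
Proof. destruct (upos_uneg_cases u n) as [(_ & -> & _)|(-> & _ & _)]; ring. Qed.

Lemma scalZ_upos_uneg_disjoint s t u n : scalZ s (upos u) n * scalZ t (uneg u) n = 0.
Proof.
  unfold scalZ.
  replace (s * upos u n * (t * uneg u n)) with (s * t * (upos u n * uneg u n)) by ring.
  rewrite upos_mul_uneg. ring.
Qed.

Lemma upos_uneg_same_sign u n : 0 <= upos u n * uneg u n.
Proof. rewrite upos_mul_uneg. lra. Qed.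

Lemma Delta_addZ u v n : Delta (addZ u v) n = Delta u n + Delta v n.
Proof. unfold Delta, addZ. ring. Qed.

Lemma Delta_scalZ s u n : Delta (scalZ s u) n = s * Delta u n.
Proof. unfold Delta, scalZ. ring. Qed.

Lemma Delta_upos_add_uneg u n : Delta (upos u) n + Delta (uneg u) n = Delta u n.
Proof. unfold Delta. rewrite <- (upos_add_uneg u n), <- (upos_add_uneg u (n + 1)). ring. Qed.

(* [max(., 0)] and [min(., 0)] are both nondecreasing, so their increments share the sign of
   [Delta u n]. *)
Lemma Delta_upos_uneg_same_sign u n : 0 <= Delta (upos u) n * Delta (uneg u) n.
Proof. unfold Delta, upos, uneg, Rmax, Rmin. repeat destruct Rle_dec; nra. Qed.

Lemma sign_comb_apply u s t n : sign_comb u s t n = s * upos u n + t * uneg u n.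
Proof. reflexivity. Qed.

Lemma upos_sign_comb u s t : 0 <= s -> 0 <= t -> upos (sign_comb u s t) = scalZ s (upos u).
Proof.
  intros Hs Ht. apply functional_extensionality. intros n. unfold upos at 1, scalZ.
  rewrite sign_comb_apply.
  destruct (upos_uneg_cases u n) as [(-> & -> & ?)|(-> & -> & ?)].
  - rewrite Rmax_left; nra.
  - rewrite Rmax_right; nra.
Qed.

Lemma uneg_sign_comb u s t : 0 <= s -> 0 <= t -> uneg (sign_comb u s t) = scalZ t (uneg u).
Proof.
  intros Hs Ht. apply functional_extensionality. intros n. unfold uneg at 1, scalZ.
  rewrite sign_comb_apply.
  destruct (upos_uneg_cases u n) as [(-> & -> & ?)|(-> & -> & ?)].
  - rewrite Rmin_right; nra.
  - rewrite Rmin_left; nra.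
Qed.

Lemma sign_comb_diag u t : sign_comb u t t = scalZ t u.
Proof.
  apply functional_extensionality. intros n. rewrite sign_comb_apply. unfold scalZ.
  rewrite <- (upos_add_uneg u n). ring.
Qed.

Lemma scalZ_1 u : scalZ 1 u = u.
Proof. apply functional_extensionality. intros n. unfold scalZ. ring. Qed.

Lemma scalZ_scalZ s t u : scalZ s (scalZ t u) = scalZ (s * t) u.
Proof. apply functional_extensionality. intros n. unfold scalZ. ring. Qed.

Lemma sign_comb_1_1 u : sign_comb u 1 1 = u.
Proof. now rewrite sign_comb_diag, scalZ_1. Qed.

Lemma addZ_upos_uneg u : addZ (upos u) (uneg u) = u.
Proof. apply functional_extensionality. intros n. apply upos_add_uneg. Qed.

End SignDecomposition.

(* The even exponent p is written [S m] with [m] odd, so that |x|^p = x^(S m) and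
   |x|^(p-2) x = x^m; [dEterm u v] is then the energy part of <I'(u), v>. *)
Section Functional.
Variables (q r : R) (a b c : Z -> R) (m : nat) (b0 : R).
Local Notation p := (INR (S m)).
Hypotheses (m_odd : Nat.Odd m) (p_lt_q : p < q) (r_pos : 0 < r).
Hypotheses (a_pos : forall n, 0 < a n) (b_pos : forall n, 0 < b n) (c_pos : forall n, 0 < c n).
Hypotheses (b0_pos : 0 < b0) (b_ge_b0 : forall n, b0 <= b n) (c_summable : summableZ c).

Local Notation I := (Ifun p q r a b c).
Local Notation I' := (dI p q r a b c).
Local Notation inD := (Defs.inD p q r a b c).
Local Notation E := (Eterm p a b).
Local Notation L := (Lterm q r c).

Definition Cterm (u : seqZ) : seqZ := fun n => c n * rpow (Rabs (u n)) q.

Definition dEterm (u v : seqZ) : seqZ :=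
  fun n => a n * (Delta u n ^ m * Delta v n) + b n * (u n ^ m * v n).

Definition logpart (u : seqZ) : R := r / q ^ 2 * sumZ (Cterm u) - 1 / q * sumZ (L u).

Lemma p_gt_1 : 1 < p.
Proof.
  destruct m_odd as [k ->]. rewrite S_INR, plus_INR, mult_INR. simpl.
  pose proof (pos_INR k). lra.
Qed.

Lemma q_pos : 0 < q.
Proof. pose proof p_gt_1. lra. Qed.

Lemma Eterm_even u n : E u n = a n * Delta u n ^ S m + b n * u n ^ S m.
Proof. unfold Eterm. now rewrite !rpow_abs_even. Qed.

Lemma Eterm_nonneg u n : 0 <= E u n.
Proof.
  rewrite Eterm_even. pose proof (pow_even_nonneg m m_odd (Delta u n)).
  pose proof (pow_even_nonneg m m_odd (u n)). pose proof (a_pos n). pose proof (b_pos n). nra.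
Qed.

Lemma dEterm_self u n : dEterm u u n = E u n.
Proof. rewrite Eterm_even. unfold dEterm. simpl. ring. Qed.

Lemma Cterm_nonneg u n : 0 <= Cterm u n.
Proof. apply Rmult_le_pos; [left; apply c_pos | apply rpow_nonneg]. Qed.

Lemma Lterm_zero u n : u n = 0 -> L u n = 0.
Proof. intros H. unfold Lterm. destruct (Req_EM_T (u n) 0); [auto | contradiction]. Qed.

Lemma Cterm_zero u n : u n = 0 -> Cterm u n = 0.
Proof. intros H. unfold Cterm. rewrite H, Rabs_R0, rpow_0_l. ring. Qed.

Lemma Lterm_scal s u n : 0 <= s ->
  L (scalZ s u) n = rpow s q * L u n + r * rpow s q * ln s * Cterm u n.
Proof.
  intros Hs. unfold Lterm, Cterm, scalZ.
  destruct (Req_EM_T (u n) 0) as [Hu|Hu].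
  { rewrite Hu, Rmult_0_r, Rabs_R0, rpow_0_l. destruct (Req_EM_T 0 0); [ring | lra]. }
  destruct (Req_dec s 0) as [->|Hs0].
  { rewrite Rmult_0_l, rpow_0_l. destruct (Req_EM_T 0 0); [ring | lra]. }
  destruct (Req_EM_T (s * u n) 0) as [H|_]; [apply Rmult_integral in H; tauto|].
  assert (0 < Rabs (u n)) by now apply Rabs_pos_lt.
  rewrite !rpow_abs_mult by lra.
  rewrite ln_mult, !ln_rpow by (try apply rpow_gt0; lra). ring.
Qed.

Lemma Cterm_scal s u n : 0 <= s -> Cterm (scalZ s u) n = rpow s q * Cterm u n.
Proof. intros. unfold Cterm, scalZ. rewrite rpow_abs_mult by auto. ring. Qed.

Lemma Lterm_addZ_disjoint u v n : u n * v n = 0 -> L (addZ u v) n = L u n + L v n.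
Proof.
  intros H. unfold addZ. apply Rmult_integral in H as [Hu|Hv].
  - rewrite (Lterm_zero u n Hu). unfold Lterm. rewrite Hu, Rplus_0_l. ring.
  - rewrite (Lterm_zero v n Hv). unfold Lterm. rewrite Hv, Rplus_0_r. ring.
Qed.

Lemma Cterm_addZ_disjoint u v n : u n * v n = 0 -> Cterm (addZ u v) n = Cterm u n + Cterm v n.
Proof.
  intros H. unfold addZ. apply Rmult_integral in H as [Hu|Hv].
  - rewrite (Cterm_zero u n Hu). unfold Cterm. rewrite Hu, Rplus_0_l. ring.
  - rewrite (Cterm_zero v n Hv). unfold Cterm. rewrite Hv, Rplus_0_r. ring.
Qed.

Lemma I_eq u : inD u -> I u = 1 / p * sumZ (E u) + logpart u.
Proof.
  intros [HE _]. unfold Ifun, normE, logpart, Cterm. rewrite rpow_inv_rpow.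
  - ring.
  - pose proof p_gt_1. lra.
  - apply sumZ_nonneg; auto using Eterm_nonneg.
Qed.

Lemma I'_eq u v : (forall n, v n = 0 \/ v n = u n) ->
  I' u v = sumZ (dEterm u v) - sumZ (L v).
Proof.
  intros Hv. unfold dI. f_equal; apply sumZ_ext; intros n.
  - unfold dEterm. rewrite <- !(rpow_abs_odd m m_odd). ring.
  - unfold Lterm. destruct (Req_EM_T (u n) 0) as [Hu|Hu];
      destruct (Hv n) as [H|H]; rewrite H; destruct (Req_EM_T _ 0); try lra; try ring.
    rewrite <- (rpow_abs_sqr (u n) q). ring.
Qed.

Lemma inD_bounded u : inD u -> exists M, 0 < M /\ forall n, Rabs (u n) <= M.
Proof.
  intros [HE _]. exists (Rmax 1 (sumZ (E u) / b0)).
  split; [pose proof (Rmax_l 1 (sumZ (E u) / b0)); lra|]. intros n.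
  destruct (Rle_dec (Rabs (u n)) 1) as [H1|H1]; [eapply Rle_trans; [exact H1 | apply Rmax_l]|].
  eapply Rle_trans; [|apply Rmax_r].
  pose proof (sumZ_ge_term _ n (Eterm_nonneg u) HE) as Hn. rewrite Eterm_even in Hn.
  assert (Rabs (u n) <= u n ^ S m).
  { rewrite <- (rpow_abs_even m m_odd), rpow_pow by (apply Rabs_pos || lia).
    rewrite <- (pow_1 (Rabs (u n))) at 1. apply Rle_pow; [lra | lia]. }
  pose proof (pow_even_nonneg m m_odd (Delta u n)). pose proof (pow_even_nonneg m m_odd (u n)).
  pose proof (a_pos n). pose proof (b_ge_b0 n).
  apply (Rmult_le_reg_r b0); auto. unfold Rdiv. rewrite Rmult_assoc, Rinv_l by lra. nra.
Qed.

Lemma Cterm_summable u : inD u -> summableZ (Cterm u).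
Proof.
  intros Hu. destruct (inD_bounded u Hu) as [M [HM Hbd]].
  apply (summableZ_le (fun n => rpow M q * c n)); [|now apply summableZ_scal].
  intros n. rewrite Rabs_right by (apply Rle_ge, Cterm_nonneg). unfold Cterm.
  rewrite Rmult_comm. apply Rmult_le_compat_r; [left; apply c_pos|].
  apply rpow_le; [split; [apply Rabs_pos | auto] | pose proof q_pos; lra].
Qed.

Lemma Lterm_summable_part u v : inD u -> (forall n, v n = 0 \/ v n = u n) -> summableZ (L v).
Proof.
  intros [_ HL] Hv. apply (summableZ_le (fun n => Rabs (L u n))); [|now apply summableZ_abs].
  intros n. destruct (Hv n) as [H|H].
  - rewrite (Lterm_zero v n H), Rabs_R0. apply Rabs_pos.
  - unfold Lterm. rewrite H. lra.
Qed.

Lemma Cterm_summable_part u v : inD u -> (forall n, v n = 0 \/ v n = u n) -> summableZ (Cterm v).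
Proof.
  intros Hu Hv. apply (summableZ_le (Cterm u)); [|now apply Cterm_summable].
  intros n. rewrite Rabs_right by (apply Rle_ge, Cterm_nonneg). destruct (Hv n) as [H|H].
  - rewrite (Cterm_zero v n H). apply Cterm_nonneg.
  - unfold Cterm. rewrite H. lra.
Qed.

Lemma Lterm_scal_summable v s : 0 <= s -> summableZ (L v) -> summableZ (Cterm v) ->
  summableZ (L (scalZ s v)).
Proof.
  intros Hs HL HC.
  apply (summableZ_ext (fun n => rpow s q * L v n + r * rpow s q * ln s * Cterm v n)).
  - intros n. symmetry. now apply Lterm_scal.
  - apply summableZ_plus; now apply summableZ_scal.
Qed.

Lemma Cterm_scal_summable v s : 0 <= s -> summableZ (Cterm v) -> summableZ (Cterm (scalZ s v)).
Proof.
  intros Hs HC. apply (summableZ_ext (fun n => rpow s q * Cterm v n)).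
  - intros n. symmetry. now apply Cterm_scal.
  - now apply summableZ_scal.
Qed.

Lemma sumZ_Lterm_scal v s : 0 <= s -> summableZ (L v) -> summableZ (Cterm v) ->
  sumZ (L (scalZ s v)) = rpow s q * sumZ (L v) + r * rpow s q * ln s * sumZ (Cterm v).
Proof.
  intros Hs HL HC. rewrite (sumZ_ext _ _ (fun n => Lterm_scal s v n Hs)).
  rewrite sumZ_plus, !sumZ_scal by now apply summableZ_scal. reflexivity.
Qed.

Definition logA (v : seqZ) : R := r / q ^ 2 * sumZ (Cterm v) - sumZ (L v) / q.
Definition logB (v : seqZ) : R := r * sumZ (Cterm v) / q.

Lemma logpart_scal v s : 0 <= s -> summableZ (L v) -> summableZ (Cterm v) ->
  logpart (scalZ s v) = powlog q (logA v) (logB v) s.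
Proof.
  intros Hs HL HC. pose proof q_pos. unfold logpart, logA, logB, powlog.
  rewrite sumZ_Lterm_scal by auto. rewrite (sumZ_ext _ _ (fun n => Cterm_scal s v n Hs)), sumZ_scal.
  field. lra.
Qed.

Lemma logpart_scal_le v s : 0 <= s -> summableZ (L v) -> summableZ (Cterm v) ->
  logpart (scalZ s v) <= logpart v + (1 - rpow s q) / q * sumZ (L v).
Proof.
  intros Hs HL HC. pose proof q_pos.
  assert (HS : 0 <= sumZ (Cterm v)) by (apply sumZ_nonneg; auto using Cterm_nonneg).
  assert (Hid : logpart v + (1 - rpow s q) / q * sumZ (L v) - logpart (scalZ s v)
                = r * sumZ (Cterm v) / q ^ 2 * (1 - rpow s q + q * rpow s q * ln s)).
  { unfold logpart. rewrite sumZ_Lterm_scal by auto.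
    rewrite (sumZ_ext _ _ (fun n => Cterm_scal s v n Hs)), sumZ_scal. field. lra. }
  assert (0 <= r * sumZ (Cterm v) / q ^ 2 * (1 - rpow s q + q * rpow s q * ln s)).
  { apply Rmult_le_pos; [apply Rdiv_le_0_compat; [nra | apply pow_lt; lra]|].
    now apply one_sub_rpow_add_ln_nonneg. }
  lra.
Qed.

Section SignCombination.
Variable u : seqZ.
Hypothesis u_in_D : inD u.
Local Notation U := (upos u).
Local Notation V := (uneg u).
Local Notation w := (sign_comb u).

Lemma upos_uneg_summable :
  summableZ (L U) /\ summableZ (L V) /\ summableZ (Cterm U) /\ summableZ (Cterm V).
Proof.
  split; [|split; [|split]];
    [apply (Lterm_summable_part u) | apply (Lterm_summable_part u)
    | apply (Cterm_summable_part u) | apply (Cterm_summable_part u)];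
    intros; auto using upos_part, uneg_part.
Qed.

Lemma Eterm_sign_comb s t n : E (w s t) n =
  a n * (s * Delta U n + t * Delta V n) ^ S m + b n * (s * U n + t * V n) ^ S m.
Proof. rewrite Eterm_even. unfold sign_comb. now rewrite Delta_addZ, !Delta_scalZ. Qed.

Lemma Eterm_split n : E u n = a n * (Delta U n + Delta V n) ^ S m + b n * (U n + V n) ^ S m.
Proof.
  rewrite <- (sign_comb_1_1 u) at 1. rewrite Eterm_sign_comb, !Rmult_1_l. reflexivity.
Qed.

Lemma Eterm_sign_comb_le s t n : 0 <= s -> 0 <= t -> E (w s t) n <= Rmax s t ^ S m * E u n.
Proof.
  intros Hs Ht. rewrite Eterm_sign_comb, Eterm_split.
  pose proof (pow_even_linear_le_max m m_odd _ _ s t (Delta_upos_uneg_same_sign u n) Hs Ht).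
  pose proof (pow_even_linear_le_max m m_odd _ _ s t
                (upos_uneg_same_sign u n) Hs Ht).
  pose proof (a_pos n). pose proof (b_pos n). nra.
Qed.

Lemma Eterm_sign_comb_summable s t : 0 <= s -> 0 <= t -> summableZ (E (w s t)).
Proof.
  intros Hs Ht. apply (summableZ_le (fun n => Rmax s t ^ S m * E u n)).
  - intros n. rewrite Rabs_right by apply Rle_ge, Eterm_nonneg. now apply Eterm_sign_comb_le.
  - apply summableZ_scal. apply u_in_D.
Qed.

Lemma dEterm_sign_comb_bound s t n : 0 <= s -> 0 <= t ->
  0 <= dEterm (w s t) (scalZ s U) n <= Rmax s t ^ S m * E u n /\
  0 <= dEterm (w s t) (scalZ t V) n <= Rmax s t ^ S m * E u n.
Proof.
  intros Hs Ht. unfold dEterm. rewrite Eterm_split, !Delta_scalZ, sign_comb_apply.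
  unfold sign_comb. rewrite Delta_addZ, !Delta_scalZ. unfold scalZ.
  pose proof (Delta_upos_uneg_same_sign u n) as HD. pose proof (upos_uneg_same_sign u n) as HU.
  pose proof (pow_odd_linear_part_bound m m_odd _ _ s t HD Hs Ht).
  pose proof (pow_odd_linear_part_bound m m_odd _ _ s t HU Hs Ht).
  rewrite Rmult_comm in HD, HU.
  pose proof (pow_odd_linear_part_bound m m_odd _ _ t s HD Ht Hs) as H1.
  pose proof (pow_odd_linear_part_bound m m_odd _ _ t s HU Ht Hs) as H2.
  rewrite (Rmax_comm t s), (Rplus_comm (t * _)), (Rplus_comm (Delta V n)) in H1.
  rewrite (Rmax_comm t s), (Rplus_comm (t * _)), (Rplus_comm (V n)) in H2.
  pose proof (a_pos n). pose proof (b_pos n). split; split; nra.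
Qed.

Lemma dEterm_sign_comb_summable s t : 0 <= s -> 0 <= t ->
  summableZ (dEterm (w s t) (scalZ s U)) /\ summableZ (dEterm (w s t) (scalZ t V)).
Proof.
  intros Hs Ht. assert (HE : summableZ (fun n => Rmax s t ^ S m * E u n))
    by (apply summableZ_scal, u_in_D).
  split; apply (summableZ_le (fun n => Rmax s t ^ S m * E u n)); auto; intros n;
    destruct (dEterm_sign_comb_bound s t n Hs Ht) as [[H1 H2] [H3 H4]];
    rewrite Rabs_right; lra.
Qed.

Lemma inD_sign_comb s t : 0 <= s -> 0 <= t -> inD (w s t).
Proof.
  intros Hs Ht. destruct upos_uneg_summable as (HLU & HLV & HCU & HCV).
  split; [now apply Eterm_sign_comb_summable|].
  apply (summableZ_ext (fun n => L (scalZ s U) n + L (scalZ t V) n)).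
  - intros n. symmetry. apply Lterm_addZ_disjoint, scalZ_upos_uneg_disjoint.
  - apply summableZ_plus; now apply Lterm_scal_summable.
Qed.

Lemma I_sign_comb s t : 0 <= s -> 0 <= t ->
  I (w s t) = 1 / p * sumZ (E (w s t)) + logpart (scalZ s U) + logpart (scalZ t V).
Proof.
  intros Hs Ht. destruct upos_uneg_summable as (HLU & HLV & HCU & HCV).
  rewrite I_eq by now apply inD_sign_comb. unfold logpart.
  rewrite (sumZ_ext (Cterm (w s t)) (fun n => Cterm (scalZ s U) n + Cterm (scalZ t V) n))
    by (intros; apply Cterm_addZ_disjoint, scalZ_upos_uneg_disjoint).
  rewrite (sumZ_ext (L (w s t)) (fun n => L (scalZ s U) n + L (scalZ t V) n))
    by (intros; apply Lterm_addZ_disjoint, scalZ_upos_uneg_disjoint).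
  rewrite !sumZ_plus by auto using Lterm_scal_summable, Cterm_scal_summable. ring.
Qed.

Lemma I'_sign_comb s t : 0 <= s -> 0 <= t ->
  I' (w s t) (upos (w s t)) = sumZ (dEterm (w s t) (scalZ s U)) - sumZ (L (scalZ s U)) /\
  I' (w s t) (uneg (w s t)) = sumZ (dEterm (w s t) (scalZ t V)) - sumZ (L (scalZ t V)).
Proof.
  intros Hs Ht. rewrite !I'_eq by (intros; apply upos_part || apply uneg_part).
  now rewrite upos_sign_comb, uneg_sign_comb.
Qed.

Lemma dEterm_parts_summable : summableZ (dEterm u U) /\ summableZ (dEterm u V).
Proof.
  pose proof (dEterm_sign_comb_summable 1 1 ltac:(lra) ltac:(lra)) as H.
  now rewrite sign_comb_1_1, !scalZ_1 in H.
Qed.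

Lemma I'_split : I' u u = I' u U + I' u V.
Proof.
  destruct upos_uneg_summable as (HLU & HLV & _ & _).
  destruct dEterm_parts_summable as [HdU HdV].
  rewrite !I'_eq by (intros; auto using upos_part, uneg_part).
  rewrite (sumZ_ext (dEterm u u) (fun n => dEterm u U n + dEterm u V n)).
  - rewrite (sumZ_ext (L u) (fun n => L U n + L V n)).
    + rewrite !sumZ_plus by auto. ring.
    + intros n. rewrite <- Lterm_addZ_disjoint by apply upos_mul_uneg.
      now rewrite addZ_upos_uneg.
  - intros n. unfold dEterm. set (x := Delta u n ^ m). set (y := u n ^ m).
    rewrite <- (upos_add_uneg u n), <- (Delta_upos_add_uneg u n). ring.
Qed.

Lemma Eterm_sign_comb_nehari_ineq s t Ks Kt n : 0 <= s -> 0 <= t ->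
  Ks <= (1 - s ^ S m) / p -> Kt <= (1 - t ^ S m) / p ->
  1 / p * E (w s t) n <= 1 / p * E u n - Ks * dEterm u U n - Kt * dEterm u V n.
Proof.
  intros Hs Ht HKs HKt. rewrite Eterm_sign_comb, Eterm_split. unfold dEterm.
  rewrite <- (Delta_upos_add_uneg u n), <- (upos_add_uneg u n).
  pose proof (pow_even_nehari_ineq m m_odd _ _ s t Ks Kt
                (Delta_upos_uneg_same_sign u n) Hs Ht HKs HKt) as HX.
  pose proof (pow_even_nehari_ineq m m_odd _ _ s t Ks Kt
                (upos_uneg_same_sign u n) Hs Ht HKs HKt) as HU.
  apply (Rmult_le_compat_l (a n)) in HX; [|left; apply a_pos].
  apply (Rmult_le_compat_l (b n)) in HU; [|left; apply b_pos].
  unfold Rdiv in *. lra.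
Qed.

Lemma I_sign_comb_le s t : 0 <= s -> 0 <= t ->
  I (w s t) <= I u - (1 - rpow s q) / q * I' u U - (1 - rpow t q) / q * I' u V.
Proof.
  intros Hs Ht. destruct upos_uneg_summable as (HLU & HLV & HCU & HCV).
  destruct dEterm_parts_summable as [HdU HdV]. pose proof p_gt_1.
  set (Ks := (1 - rpow s q) / q). set (Kt := (1 - rpow t q) / q).
  assert (HKs : Ks <= (1 - s ^ S m) / p)
    by (rewrite <- rpow_pow by (lia || lra); apply one_sub_rpow_div_le; lra).
  assert (HKt : Kt <= (1 - t ^ S m) / p)
    by (rewrite <- rpow_pow by (lia || lra); apply one_sub_rpow_div_le; lra).
  assert (HEu : summableZ (E u)) by apply u_in_D.
  assert (Henergy : sumZ (fun n => 1 / p * E (w s t) n)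
    <= sumZ (fun n => 1 / p * E u n + - Ks * dEterm u U n + - Kt * dEterm u V n)).
  { apply sumZ_le.
    - intros n. pose proof (Eterm_sign_comb_nehari_ineq s t Ks Kt n Hs Ht HKs HKt). lra.
    - apply summableZ_scal, Eterm_sign_comb_summable; auto.
    - repeat apply summableZ_plus; now apply summableZ_scal. }
  rewrite !sumZ_plus, !sumZ_scal in Henergy
    by (repeat apply summableZ_plus; auto using summableZ_scal).
  pose proof (logpart_scal_le U s Hs HLU HCU) as HlogU. fold Ks in HlogU.
  pose proof (logpart_scal_le V t Ht HLV HCV) as HlogV. fold Kt in HlogV.
  pose proof (I_sign_comb 1 1 ltac:(lra) ltac:(lra)) as Hu.
  rewrite sign_comb_1_1, !scalZ_1 in Hu.
  rewrite I_sign_comb, Hu by auto.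
  rewrite !I'_eq by (intros; auto using upos_part, uneg_part).
  lra.
Qed.

Lemma energy_sign_comb_bound s t : 0 <= s -> 0 <= t ->
  sumZ (E (w s t)) <= Rmax s t ^ S m * sumZ (E u).
Proof.
  intros Hs Ht. rewrite <- sumZ_scal. apply sumZ_le.
  - intros n. now apply Eterm_sign_comb_le.
  - now apply Eterm_sign_comb_summable.
  - apply summableZ_scal, u_in_D.
Qed.

Lemma energy_sign_comb_mono s s' t t' : 0 <= s <= s' -> 0 <= t <= t' ->
  sumZ (E (w s t)) <= sumZ (E (w s' t')).
Proof.
  intros Hs Ht. apply sumZ_le; try apply Eterm_sign_comb_summable; try lra.
  intros n. rewrite !Eterm_sign_comb.
  pose proof (pow_even_linear_mono m m_odd _ _ s s' t t' (Delta_upos_uneg_same_sign u n) Hs Ht).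
  pose proof (pow_even_linear_mono m m_odd _ _ s s' t t' (upos_uneg_same_sign u n) Hs Ht).
  pose proof (a_pos n). pose proof (b_pos n). nra.
Qed.

Lemma energy_sign_comb_lipschitz s s' t t' M :
  0 <= s <= M -> 0 <= s' <= M -> 0 <= t <= M -> 0 <= t' <= M ->
  Rabs (sumZ (E (w s t)) - sumZ (E (w s' t')))
  <= p * M ^ m * (Rabs (s - s') + Rabs (t - t')) * sumZ (E u).
Proof.
  intros Hs Hs' Ht Ht'.
  assert (HK : 0 <= p * M ^ m * (Rabs (s - s') + Rabs (t - t'))).
  { apply Rmult_le_pos; [apply Rmult_le_pos; [apply pos_INR | apply pow_le; lra]|].
    pose proof (Rabs_pos (s - s')). pose proof (Rabs_pos (t - t')). lra. }
  apply sumZ_dist_le; try apply Eterm_sign_comb_summable; try lra; try apply u_in_D; auto.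
  intros n. rewrite !Eterm_sign_comb, Eterm_split.
  pose proof (pow_even_linear_lipschitz m m_odd _ _ s s' t t' M
                (Delta_upos_uneg_same_sign u n) Hs Hs' Ht Ht') as HX.
  pose proof (pow_even_linear_lipschitz m m_odd _ _ s s' t t' M
                (upos_uneg_same_sign u n) Hs Hs' Ht Ht') as HU.
  pose proof (a_pos n). pose proof (b_pos n).
  replace (a n * (s * Delta U n + t * Delta V n) ^ S m + b n * (s * U n + t * V n) ^ S m
           - (a n * (s' * Delta U n + t' * Delta V n) ^ S m + b n * (s' * U n + t' * V n) ^ S m))
    with (a n * ((s * Delta U n + t * Delta V n) ^ S m - (s' * Delta U n + t' * Delta V n) ^ S m)
          + b n * ((s * U n + t * V n) ^ S m - (s' * U n + t' * V n) ^ S m)) by ring.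
  eapply Rle_trans; [apply Rabs_triang|].
  rewrite !Rabs_mult, (Rabs_right (a n)), (Rabs_right (b n)) by lra.
  apply (Rmult_le_compat_l (a n)) in HX; [|lra]. apply (Rmult_le_compat_l (b n)) in HU; [|lra].
  lra.
Qed.

Lemma energy_sign_comb_tangent s t sg tg : 0 <= s -> 0 <= t -> 0 <= sg -> 0 <= tg ->
  (sg - 1) * sumZ (dEterm (w s t) (scalZ s U)) + (tg - 1) * sumZ (dEterm (w s t) (scalZ t V))
  <= (sumZ (E (w (sg * s) (tg * t))) - sumZ (E (w s t))) / p.
Proof.
  intros Hs Ht Hsg Htg. pose proof p_gt_1.
  destruct (dEterm_sign_comb_summable s t Hs Ht) as [H1 H2].
  assert (HE : summableZ (E (w s t))) by now apply Eterm_sign_comb_summable.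
  assert (HE' : summableZ (E (w (sg * s) (tg * t)))) by (apply Eterm_sign_comb_summable; nra).
  unfold Rdiv. rewrite <- sumZ_minus, <- !sumZ_scal, <- sumZ_plus, Rmult_comm, <- sumZ_scal
    by auto using summableZ_scal.
  apply sumZ_le; [| now apply summableZ_plus; apply summableZ_scal
                  | apply summableZ_scal; now apply summableZ_minus].
  intros n. rewrite !Eterm_sign_comb. unfold dEterm. rewrite sign_comb_apply.
  unfold sign_comb. rewrite Delta_addZ, !Delta_scalZ. unfold scalZ.
  set (X := Delta U n). set (Y := Delta V n).
  pose proof (Delta_upos_uneg_same_sign u n) as HXY. pose proof (upos_uneg_same_sign u n) as HUV.
  fold X Y in HXY.
  assert (HX : 0 <= (s * X + t * Y) * (sg * s * X + tg * t * Y))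
    by (apply same_sign_linear_forms; auto; nra).
  assert (HU : 0 <= (s * U n + t * V n) * (sg * s * U n + tg * t * V n))
    by (apply same_sign_linear_forms; auto; nra).
  apply (pow_even_tangent_le m m_odd) in HX, HU.
  apply (Rmult_le_compat_l (a n)) in HX; [|left; apply a_pos].
  apply (Rmult_le_compat_l (b n)) in HU; [|left; apply b_pos].
  apply (Rmult_le_reg_l p); [lra|]. rewrite <- (Rmult_assoc p), Rinv_r, Rmult_1_l by lra.
  lra.
Qed.

End SignCombination.

Local Notation inN := (Defs.inN p q r a b c).
Local Notation inM := (Defs.inM p q r a b c).

Lemma nehari_ray_le v t : inN v -> 0 <= t -> I (scalZ t v) <= I v.
Proof.
  intros [Hv [_ Hd]] Ht. pose proof (I_sign_comb_le v Hv t t Ht Ht) as Hle.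
  rewrite sign_comb_diag in Hle. pose proof (I'_split v Hv) as Hsplit.
  replace (I' v (uneg v)) with (- I' v (upos v)) in Hle by lra. lra.
Qed.

Lemma nodal_nehari_quad_le v s t : inM v -> 0 <= s -> 0 <= t -> I (sign_comb v s t) <= I v.
Proof.
  intros (Hv & _ & _ & HU & HV) Hs Ht. pose proof (I_sign_comb_le v Hv s t Hs Ht) as Hle.
  rewrite HU, HV in Hle. lra.
Qed.

Lemma sumZ_Cterm_pos v : v <> zeroZ -> summableZ (Cterm v) -> 0 < sumZ (Cterm v).
Proof.
  intros Hv HC. destruct (seqZ_nonzero v Hv) as [n Hn].
  assert (0 < Cterm v n)
    by (apply Rmult_lt_0_compat; [apply c_pos | apply rpow_gt0, Rabs_pos_lt; auto]).
  pose proof (sumZ_ge_term _ n (Cterm_nonneg v) HC). lra.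
Qed.

Lemma energy_pos v : inD v -> v <> zeroZ -> 0 < sumZ (E v).
Proof.
  intros [HE _] Hv. destruct (seqZ_nonzero v Hv) as [n Hn].
  pose proof (sumZ_ge_term _ n (Eterm_nonneg v) HE) as Hn'. rewrite Eterm_even in Hn'.
  pose proof (pow_even_pos m m_odd _ Hn). pose proof (pow_even_nonneg m m_odd (Delta v n)).
  pose proof (a_pos n). pose proof (b_pos n). nra.
Qed.

Lemma I'_scal_self v t : inD v -> 0 <= t ->
  I' (scalZ t v) (scalZ t v) = t ^ S m * sumZ (E v) - sumZ (L (scalZ t v)).
Proof.
  intros Hv Ht. rewrite I'_eq by auto. f_equal.
  rewrite <- sumZ_scal. apply sumZ_ext. intros n.
  rewrite dEterm_self, !Eterm_even, Delta_scalZ. unfold scalZ. rewrite !Rpow_mult_distr. ring.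
Qed.

Lemma nehari_scaling_exists v : inD v -> v <> zeroZ -> exists t0, 0 < t0 /\ inN (scalZ t0 v).
Proof.
  intros Hv Hne. pose proof q_pos as Hq.
  assert (HC : summableZ (Cterm v)) by now apply Cterm_summable.
  assert (HL : summableZ (L v)) by apply Hv.
  assert (HB : 0 < r * sumZ (Cterm v)) by (apply Rmult_lt_0_compat; [|apply sumZ_Cterm_pos]; auto).
  destruct (pow_add_powlog_root q (- sumZ (L v)) (r * sumZ (Cterm v)) Hq HB (sumZ (E v)) (S m)
              (energy_pos v Hv Hne) (Rlt_le _ _ p_lt_q)) as [z [Hz Hroot]].
  exists z. split; [auto|]. split; [rewrite <- sign_comb_diag; apply inD_sign_comb; auto; lra|].
  split; [apply scalZ_nonzero; auto; lra|].
  rewrite I'_scal_self, sumZ_Lterm_scal by (auto; lra).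
  rewrite <- Hroot. unfold powlog. ring.
Qed.

Lemma critical_of_subgradient v s0 Ed : 0 < s0 -> summableZ (L v) -> summableZ (Cterm v) ->
  (forall x, 0 < x < 2 ->
     (x - 1) * Ed + powlog q (logA v) (logB v) (x * s0) <= powlog q (logA v) (logB v) s0) ->
  Ed - sumZ (L (scalZ s0 v)) = 0.
Proof.
  intros Hs0 HL HC Hsub. pose proof q_pos.
  pose proof (subgradient_max_derive _ Ed s0 _ Hs0 (is_derive_powlog q (logA v) (logB v) s0 Hs0)
                Hsub) as Hcrit.
  rewrite sumZ_Lterm_scal by (auto; lra). rewrite <- Hcrit. unfold logA, logB. field. lra.
Qed.

Section Nodal.
Variable u : seqZ.
Hypotheses (u_in_D : inD u) (upos_nonzero : upos u <> zeroZ) (uneg_nonzero : uneg u <> zeroZ).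
Local Notation U := (upos u).
Local Notation V := (uneg u).
Local Notation w := (sign_comb u).
Local Notation Phi s t := (1 / p * sumZ (E (w s t)) + powlog q (logA U) (logB U) s
                                                   + powlog q (logA V) (logB V) t).

Lemma logB_upos_uneg_pos : 0 < logB U /\ 0 < logB V.
Proof.
  destruct (upos_uneg_summable u u_in_D) as (_ & _ & HCU & HCV). pose proof q_pos as Hq.
  split; apply Rdiv_lt_0_compat, Hq; apply Rmult_lt_0_compat, sumZ_Cterm_pos; auto.
Qed.

Lemma I_Phi s t : 0 <= s -> 0 <= t -> I (w s t) = Phi s t.
Proof.
  intros Hs Ht. destruct (upos_uneg_summable u u_in_D) as (HLU & HLV & HCU & HCV).
  rewrite I_sign_comb, !logpart_scal by auto. reflexivity.
Qed.

Lemma Phi_large : exists R, 1 <= R /\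
  forall s t, 0 <= s -> 0 <= t -> (R <= s \/ R <= t) -> Phi s t <= 0.
Proof.
  destruct logB_upos_uneg_pos as [HB1 HB2]. pose proof q_pos as Hq. pose proof p_gt_1.
  destruct (powlog_bounded_above q (logA U) (logB U) Hq HB1) as [M1 HM1].
  destruct (powlog_bounded_above q (logA V) (logB V) Hq HB2) as [M2 HM2].
  set (C := sumZ (E u) / p).
  assert (HC : 0 <= C)
    by (apply Rdiv_le_0_compat; [apply sumZ_nonneg; [apply Eterm_nonneg | apply u_in_D] | lra]).
  destruct (powlog_dominates_pow q (logA U) (logB U) Hq HB1 C (S m) HC (Rlt_le _ _ p_lt_q) M2)
    as [R1 [HR1 HL1]].
  destruct (powlog_dominates_pow q (logA V) (logB V) Hq HB2 C (S m) HC (Rlt_le _ _ p_lt_q) M1)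
    as [R2 [HR2 HL2]].
  exists (Rmax R1 R2). split; [eapply Rle_trans; [exact HR1 | apply Rmax_l]|].
  intros s t Hs Ht Hst. pose proof (Rmax_l R1 R2). pose proof (Rmax_r R1 R2).
  assert (HN : 1 / p * sumZ (E (w s t)) <= C * Rmax s t ^ S m).
  { pose proof (energy_sign_comb_bound u u_in_D s t Hs Ht) as Hbd.
    apply (Rmult_le_compat_l (1 / p)) in Hbd; [|apply Rdiv_le_0_compat; lra].
    unfold C, Rdiv in *. lra. }
  specialize (HM1 s Hs). specialize (HM2 t Ht).
  destruct (Rle_dec t s).
  - rewrite Rmax_left in HN by auto. specialize (HL1 s ltac:(destruct Hst; lra)). lra.
  - rewrite Rmax_right in HN by lra. specialize (HL2 t ltac:(destruct Hst; lra)). lra.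
Qed.

Lemma Phi_small : exists d, 0 < d <= 1 /\
  (forall s t, 0 <= s <= d -> 0 <= t -> Phi s t <= Phi d t) /\
  (forall s t, 0 <= s -> 0 <= t <= d -> Phi s t <= Phi s d) /\ 0 <= Phi d d.
Proof.
  destruct logB_upos_uneg_pos as [HB1 HB2]. pose proof q_pos as Hq. pose proof p_gt_1.
  destruct (powlog_nondecreasing_near_0 q (logA U) (logB U) Hq HB1) as [d1 [Hd1 Hm1]].
  destruct (powlog_nondecreasing_near_0 q (logA V) (logB V) Hq HB2) as [d2 [Hd2 Hm2]].
  pose proof (Rmin_l d1 d2). pose proof (Rmin_r d1 d2). set (d := Rmin d1 d2) in *.
  assert (Hd : 0 < d) by (apply Rmin_glb_lt; lra).
  assert (Hp : 0 <= 1 / p) by (apply Rdiv_le_0_compat; lra).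
  exists d. split; [lra|]. split; [|split].
  - intros s t Hs Ht. pose proof (Hm1 s d ltac:(lra) ltac:(lra) ltac:(lra)).
    pose proof (energy_sign_comb_mono u u_in_D s d t t ltac:(lra) ltac:(lra)) as HN.
    apply (Rmult_le_compat_l (1 / p)) in HN; auto. lra.
  - intros s t Hs Ht. pose proof (Hm2 t d ltac:(lra) ltac:(lra) ltac:(lra)).
    pose proof (energy_sign_comb_mono u u_in_D s s t d ltac:(lra) ltac:(lra)) as HN.
    apply (Rmult_le_compat_l (1 / p)) in HN; auto. lra.
  - pose proof (Hm1 0 d ltac:(lra) ltac:(lra) ltac:(lra)).
    pose proof (Hm2 0 d ltac:(lra) ltac:(lra) ltac:(lra)). rewrite powlog_0 in *.
    assert (0 <= 1 / p * sumZ (E (w d d))).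
    { apply Rmult_le_pos; auto. apply sumZ_nonneg; [apply Eterm_nonneg|].
      apply Eterm_sign_comb_summable; auto; lra. }
    lra.
Qed.

Lemma energy_part_lipschitz s s' t t' M :
  0 <= s <= M -> 0 <= s' <= M -> 0 <= t <= M -> 0 <= t' <= M ->
  Rabs (1 / p * sumZ (E (w s t)) - 1 / p * sumZ (E (w s' t')))
  <= M ^ m * sumZ (E u) * (Rabs (s - s') + Rabs (t - t')).
Proof.
  intros Hs Hs' Ht Ht'. pose proof p_gt_1.
  rewrite <- Rmult_minus_distr_l, Rabs_mult, Rabs_right by (apply Rle_ge, Rdiv_le_0_compat; lra).
  pose proof (energy_sign_comb_lipschitz u u_in_D s s' t t' M Hs Hs' Ht Ht') as HL.
  apply (Rmult_le_compat_l (1 / p)) in HL; [|apply Rdiv_le_0_compat; lra].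
  eapply Rle_trans; [exact HL|]. right. field. lra.
Qed.

Lemma Phi_continuity_pt_r d R s t : 0 < d -> d <= s <= R -> d <= t <= R ->
  continuity_pt (fun t' => Phi s t') t.
Proof.
  intros Hd Hs Ht.
  apply (continuity_pt_plus (fun t' => 1 / p * sumZ (E (w s t')) + powlog q (logA U) (logB U) s)).
  - apply (continuity_pt_lipschitz _ _ ((R + d) ^ m * sumZ (E u)) d Hd). intros t' Ht'.
    replace (1 / p * sumZ (E (w s t')) + powlog q (logA U) (logB U) s
             - (1 / p * sumZ (E (w s t)) + powlog q (logA U) (logB U) s))
      with (1 / p * sumZ (E (w s t')) - 1 / p * sumZ (E (w s t))) by ring.
    apply Rabs_lt_between' in Ht'.
    eapply Rle_trans; [apply (energy_part_lipschitz _ _ _ _ (R + d)); lra|].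
    rewrite Rminus_diag, Rabs_R0, Rplus_0_l. lra.
  - apply continuity_pt_powlog. lra.
Qed.

Lemma Phi_continuity_l_unif d R s : 0 < d -> d <= s <= R -> forall eps, 0 < eps ->
  exists del, 0 < del /\ forall s', d <= s' <= R -> Rabs (s' - s) < del ->
  forall t, d <= t <= R -> Rabs (Phi s' t - Phi s t) < eps.
Proof.
  intros Hd Hs eps Heps.
  destruct (proj1 (continuity_pt_eps _ s) (continuity_pt_powlog q (logA U) (logB U) s ltac:(lra))
              (eps / 2) ltac:(lra)) as [del1 [Hdel1 Hpl]].
  set (K := R ^ m * sumZ (E u) + 1).
  assert (HK : 0 < K).
  { assert (0 <= R ^ m * sumZ (E u)); [|unfold K; lra].
    apply Rmult_le_pos; [apply pow_le; lra|].
    apply sumZ_nonneg; [apply Eterm_nonneg | apply u_in_D]. }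
  exists (Rmin del1 (eps / (2 * K))).
  split; [apply Rmin_glb_lt; [lra | apply Rdiv_lt_0_compat; lra]|].
  intros s' Hs' Hss t Ht.
  pose proof (Rmin_l del1 (eps / (2 * K))). pose proof (Rmin_r del1 (eps / (2 * K))).
  specialize (Hpl s' ltac:(lra)).
  pose proof (energy_part_lipschitz s' s t t R ltac:(lra) ltac:(lra) ltac:(lra) ltac:(lra)) as HN.
  rewrite Rminus_diag, Rabs_R0, Rplus_0_r in HN.
  assert (HNK : R ^ m * sumZ (E u) * Rabs (s' - s) < eps / 2).
  { apply Rle_lt_trans with (K * Rabs (s' - s)).
    - apply Rmult_le_compat_r; [apply Rabs_pos | unfold K; lra].
    - apply (Rmult_lt_reg_l (/ K)); [now apply Rinv_0_lt_compat|].
      rewrite <- Rmult_assoc, Rinv_l, Rmult_1_l by lra.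
      replace (/ K * (eps / 2)) with (eps / (2 * K)) by (field; lra). lra. }
  replace (Phi s' t - Phi s t) with ((1 / p * sumZ (E (w s' t)) - 1 / p * sumZ (E (w s t)))
    + (powlog q (logA U) (logB U) s' - powlog q (logA U) (logB U) s)) by ring.
  eapply Rle_lt_trans; [apply Rabs_triang|]. lra.
Qed.

Lemma Phi_global_max : exists s0 t0, 0 < s0 /\ 0 < t0 /\
  forall s t, 0 <= s -> 0 <= t -> Phi s t <= Phi s0 t0.
Proof.
  destruct Phi_large as [R [HR Hlarge]]. destruct Phi_small as (d & Hd & Hs_small & Ht_small & Hdd).
  destruct (continuity2_ab_maj (fun s t => Phi s t) d R ltac:(lra)
              (fun s t Hs Ht => Phi_continuity_pt_r d R s t ltac:(lra) Hs Ht)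
              (fun s Hs => Phi_continuity_l_unif d R s ltac:(lra) Hs))
    as (s0 & t0 & Hs0 & Ht0 & Hmax).
  exists s0, t0. split; [lra|]. split; [lra|]. intros s t Hs Ht.
  pose proof (Hmax d d ltac:(lra) ltac:(lra)).
  destruct (Rle_dec R s) as [HRs|HRs]; [pose proof (Hlarge s t Hs Ht (or_introl HRs)); lra|].
  destruct (Rle_dec R t) as [HRt|HRt]; [pose proof (Hlarge s t Hs Ht (or_intror HRt)); lra|].
  pose proof (Rmax_l d s). pose proof (Rmax_r d s).
  pose proof (Rmax_l d t). pose proof (Rmax_r d t).
  assert (Phi s t <= Phi (Rmax d s) t).
  { destruct (Rle_dec s d); [rewrite Rmax_left by lra; apply Hs_small; lra|].
    rewrite Rmax_right by lra. lra. }
  assert (Phi (Rmax d s) t <= Phi (Rmax d s) (Rmax d t)).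
  { destruct (Rle_dec t d); [rewrite (Rmax_left d t) by lra; apply Ht_small; lra|].
    rewrite (Rmax_right d t) by lra. lra. }
  pose proof (Hmax (Rmax d s) (Rmax d t) ltac:(split; [lra | apply Rmax_lub; lra])
                ltac:(split; [lra | apply Rmax_lub; lra])).
  lra.
Qed.

Lemma nodal_critical s0 t0 : 0 < s0 -> 0 < t0 ->
  (forall s t, 0 <= s -> 0 <= t -> Phi s t <= Phi s0 t0) -> inM (w s0 t0).
Proof.
  intros Hs0 Ht0 Hmax. pose proof p_gt_1.
  destruct (upos_uneg_summable u u_in_D) as (HLU & HLV & HCU & HCV).
  destruct (I'_sign_comb u s0 t0 ltac:(lra) ltac:(lra)) as [HI'U HI'V].
  split; [apply inD_sign_comb; auto; lra|].
  rewrite upos_sign_comb, uneg_sign_comb in * by lra.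
  split; [apply scalZ_nonzero; auto; lra|]. split; [apply scalZ_nonzero; auto; lra|].
  rewrite HI'U, HI'V. split.
  - apply critical_of_subgradient; auto. intros x Hx.
    pose proof (energy_sign_comb_tangent u u_in_D s0 t0 x 1) as Ht.
    specialize (Ht ltac:(lra) ltac:(lra) ltac:(lra) ltac:(lra)).
    rewrite Rmult_1_l in Ht. pose proof (Hmax (x * s0) t0 ltac:(nra) ltac:(lra)).
    unfold Rdiv in Ht. lra.
  - apply critical_of_subgradient; auto. intros x Hx.
    pose proof (energy_sign_comb_tangent u u_in_D s0 t0 1 x) as Ht.
    specialize (Ht ltac:(lra) ltac:(lra) ltac:(lra) ltac:(lra)).
    rewrite Rmult_1_l in Ht. pose proof (Hmax s0 (x * t0) ltac:(lra) ltac:(nra)).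
    unfold Rdiv in Ht. lra.
Qed.

End Nodal.

Lemma nehari_ray_max v : inD v -> v <> zeroZ -> exists t0, 0 < t0 /\ inN (scalZ t0 v) /\
  forall t, 0 <= t -> I (scalZ t v) <= I (scalZ t0 v).
Proof.
  intros Hv Hne. destruct (nehari_scaling_exists v Hv Hne) as [t0 [Ht0 HN]].
  exists t0. split; [lra|]. split; [auto|]. intros t Ht.
  replace (scalZ t v) with (scalZ (t / t0) (scalZ t0 v))
    by (rewrite scalZ_scalZ; f_equal; field; lra).
  apply nehari_ray_le; auto. apply Rdiv_le_0_compat; lra.
Qed.

Lemma nodal_quad_max v : inD v -> upos v <> zeroZ -> uneg v <> zeroZ ->
  exists s0 t0, 0 < s0 /\ 0 < t0 /\ inM (sign_comb v s0 t0) /\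
  forall s t, 0 <= s -> 0 <= t -> I (sign_comb v s t) <= I (sign_comb v s0 t0).
Proof.
  intros Hv HU HV. destruct (Phi_global_max v Hv HU HV) as (s0 & t0 & Hs0 & Ht0 & Hmax).
  exists s0, t0. split; [auto|]. split; [auto|]. split; [now apply nodal_critical|].
  intros s t Hs Ht. rewrite !I_Phi by (auto; lra). now apply Hmax.
Qed.

Local Notation maxRay := (Defs.maxRay p q r a b c).
Local Notation maxQuad := (Defs.maxQuad p q r a b c).

Lemma maxRay_attained v t0 : 0 <= t0 ->
  (forall t, 0 <= t -> I (scalZ t v) <= I (scalZ t0 v)) -> maxRay v = Finite (I (scalZ t0 v)).
Proof.
  intros Ht0 Hmax. apply is_lub_Rbar_unique. split.
  - intros y [t [Ht ->]]. now apply Hmax.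
  - intros l Hl. apply Hl. now exists t0.
Qed.

Lemma maxQuad_attained v s0 t0 : 0 <= s0 -> 0 <= t0 ->
  (forall s t, 0 <= s -> 0 <= t -> I (sign_comb v s t) <= I (sign_comb v s0 t0)) ->
  maxQuad v = Finite (I (sign_comb v s0 t0)).
Proof.
  intros Hs0 Ht0 Hmax. apply is_lub_Rbar_unique. split.
  - intros y (s & t & Hs & Ht & ->). now apply Hmax.
  - intros l Hl. apply Hl. now exists s0, t0.
Qed.

Lemma nehari_inf_eq :
  Glb_Rbar (fun y => exists v, inN v /\ y = I v)
  = Glb_Rbar (fun y => exists v, inD v /\ v <> zeroZ /\ Finite y = maxRay v).
Proof.
  apply Glb_Rbar_eqset. intros y. split.
  - intros [v [HN ->]]. pose proof HN as (Hv & Hne & _). exists v. split; [auto|]. split; [auto|].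
    rewrite (maxRay_attained v 1); [now rewrite scalZ_1 | lra |].
    intros t Ht. rewrite scalZ_1. now apply nehari_ray_le.
  - intros (v & Hv & Hne & Hy). destruct (nehari_ray_max v Hv Hne) as (t0 & Ht0 & HN & Hmax).
    exists (scalZ t0 v). split; [auto|].
    rewrite (maxRay_attained v t0) in Hy by (auto; lra). now injection Hy.
Qed.

Lemma nodal_inf_eq :
  Glb_Rbar (fun y => exists v, inM v /\ y = I v)
  = Glb_Rbar (fun y => exists v, inD v /\ upos v <> zeroZ /\ uneg v <> zeroZ /\
                                 Finite y = maxQuad v).
Proof.
  apply Glb_Rbar_eqset. intros y. split.
  - intros [v [HM ->]]. pose proof HM as (Hv & HU & HV & _). exists v.
    split; [auto|]. split; [auto|]. split; [auto|].
    rewrite (maxQuad_attained v 1 1); [now rewrite sign_comb_1_1 | lra | lra |].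
    intros s t Hs Ht. rewrite sign_comb_1_1. now apply nodal_nehari_quad_le.
  - intros (v & Hv & HU & HV & Hy).
    destruct (nodal_quad_max v Hv HU HV) as (s0 & t0 & Hs0 & Ht0 & HM & Hmax).
    exists (sign_comb v s0 t0). split; [auto|].
    rewrite (maxQuad_attained v s0 t0) in Hy by (auto; lra). now injection Hy.
Qed.

End Functional.

Theorem lemma2p8 (p q r : R) (a b c : Z -> R)
  (Hp : 1 < p) (Hpq : p < q) (Hp2 : exists k : nat, (0 < k)%nat /\ p / 2 = INR k)
  (Hr : 1 <= r)
  (Ha : forall n, 0 < a n) (Hb : forall n, 0 < b n) (Hc : forall n, 0 < c n)
  (* (C1) *)
  (HC1a : exists b0, 0 < b0 /\ forall n, b0 <= b n)
  (HC1b : forall M, exists N : Z, forall n, (N < Z.abs n)%Z -> M < b n)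
  (* (C2) *)
  (HC2a : exists c0, 0 < c0 /\ forall n, c n <= c0)
  (HC2b : summableZ c) :
  (* the maxima are attained *)
  (forall u, inD p q r a b c u -> u <> zeroZ ->
     exists t0, 0 <= t0 /\
       forall t, 0 <= t -> Ifun p q r a b c (scalZ t u) <= Ifun p q r a b c (scalZ t0 u)) /\
  (forall u, inD p q r a b c u -> upos u <> zeroZ -> uneg u <> zeroZ ->
     exists s0 t0, 0 <= s0 /\ 0 <= t0 /\
       forall s t, 0 <= s -> 0 <= t ->
         Ifun p q r a b c (addZ (scalZ s (upos u)) (scalZ t (uneg u)))
         <= Ifun p q r a b c (addZ (scalZ s0 (upos u)) (scalZ t0 (uneg u)))) /\
  (* c_* *)
  Glb_Rbar (fun y => exists u, inN p q r a b c u /\ y = Ifun p q r a b c u)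
  = Glb_Rbar (fun y => exists u, inD p q r a b c u /\ u <> zeroZ /\
                         Finite y = maxRay p q r a b c u) /\
  (* m_* *)
  Glb_Rbar (fun y => exists u, inM p q r a b c u /\ y = Ifun p q r a b c u)
  = Glb_Rbar (fun y => exists u, inD p q r a b c u /\ upos u <> zeroZ /\
                         uneg u <> zeroZ /\ Finite y = maxQuad p q r a b c u).
Proof.
  (* [Hp] follows from [Hp2]. *)
  destruct Hp2 as [k [Hk Hpk]]. destruct HC1a as [b0 [Hb0 Hbb]].
  set (m := (2 * k - 1)%nat).
  assert (Hm : Nat.Odd m) by (exists (k - 1)%nat; unfold m; lia).
  assert (Hpm : p = INR (S m)).
  { unfold m. replace (S (2 * k - 1)) with (2 * k)%nat by lia. rewrite mult_INR. simpl. lra. }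
  assert (Hr0 : 0 < r) by lra.
  subst p. split; [|split; [|split]].
  - intros u Hu Hne.
    destruct (nehari_ray_max q r a b c m b0 Hm Hpq Hr0 Ha Hb Hc Hb0 Hbb HC2b u Hu Hne)
      as (t0 & Ht0 & _ & Hmax).
    exists t0. split; [lra | exact Hmax].
  - intros u Hu HU HV.
    destruct (nodal_quad_max q r a b c m b0 Hm Hpq Hr0 Ha Hb Hc Hb0 Hbb HC2b u Hu HU HV)
      as (s0 & t0 & Hs0 & Ht0 & _ & Hmax).
    exists s0, t0. split; [lra|]. split; [lra | exact Hmax].
  - exact (nehari_inf_eq q r a b c m b0 Hm Hpq Hr0 Ha Hb Hc Hb0 Hbb HC2b).
  - exact (nodal_inf_eq q r a b c m b0 Hm Hpq Hr0 Ha Hb Hc Hb0 Hbb HC2b).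
Qed.
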